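(* Let $\phi(x,y,z)=\alpha x+\beta y+\gamma z$ with $\alpha,\beta,\gamma\in\mathbb{R}$ not all zero, and let $S\subset\mathbb{R}^3$ be a cyclic surface which is $\phi$-minimal. Then the planes containing the circles (or arcs of circles) of the foliation of $S$ are parallel to one another.
   Context: For a smooth oriented surface $S\subset\mathbb{R}^3$ with unit normal (Gauss map) $N$, let $H$ denote its mean curvature, normalized so that the mean curvature vector is $\Delta_S X = 2HN$ ($X$ the position vector, $\Delta_S$ the Laplace–Beltrami operator); e.g. for a graph $z=u(x,y)$ with upward normal, $2H=\operatorname{div}\big(\nabla u/\sqrt{1+|\nabla u|^2}\big)$. For the density $e^{\phi}$ on $\mathbb{R}^3$ with $\phi(x,y,z)=\alpha x+\beta y+\gamma z$ (a log-linear density), the vector $\vec v=(\alpha,\beta,\gamma)$ is called the $\phi$-density vector, and the $\phi$-mean curvature is $H_\phi = H-\tfrac12\frac{d\phi}{dN}=H-\tfrac12\langle N,\vec v\rangle$. $S$ is $\phi$-minimal if $H_\phi\equiv 0$, i.e. $H=\tfrac12\langle N,\vec v\rangle$ on $S$ (this condition is independent of the choice of orientation). A cyclic surface is a surface generated by a smooth one-parameter family of circles (not necessarily of the same radius), or of arcs of circles; i.e. locally $X(s,t)=\mathbf c(s)+r(s)(\cos t\,\mathbf e_1(s)+\sin t\,\mathbf e_2(s))$ with $r>0$, $\{\mathbf e_1(s),\mathbf e_2(s)\}$ orthonormal spanning the plane of the $s$-th circle, $t$ in an interval. The result is local. *)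

From Stdlib Require Import Reals.
Open Scope R_scope.

Record vec3 : Type := V3 { vx : R; vy : R; vz : R }.

Definition vadd (u v : vec3) : vec3 := V3 (vx u + vx v) (vy u + vy v) (vz u + vz v).
Definition vscal (a : R) (u : vec3) : vec3 := V3 (a * vx u) (a * vy u) (a * vz u).
Definition vdot (u v : vec3) : R := vx u * vx v + vy u * vy v + vz u * vz v.
Definition vcross (u v : vec3) : vec3 :=
  V3 (vy u * vz v - vz u * vy v) (vz u * vx v - vx u * vz v) (vx u * vy v - vy u * vx v).
Definition vnorm (u : vec3) : R := sqrt (vdot u u).
Definition vzero : vec3 := V3 0 0 0.

Definition has_deriv3 (f : R -> vec3) (x : R) (d : vec3) : Prop :=
  derivable_pt_lim (fun y => vx (f y)) x (vx d) /\
  derivable_pt_lim (fun y => vy (f y)) x (vy d) /\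
  derivable_pt_lim (fun y => vz (f y)) x (vz d).

Definition smooth_on (a b : R) (f : R -> R) : Prop :=
  exists D : nat -> R -> R, D O = f /\
    forall (n : nat) (x : R), a < x < b -> derivable_pt_lim (D n) x (D (S n) x).

Definition smooth3_on (a b : R) (f : R -> vec3) : Prop :=
  smooth_on a b (fun y => vx (f y)) /\ smooth_on a b (fun y => vy (f y)) /\
  smooth_on a b (fun y => vz (f y)).

(* Normalization: H = (k1+k2)/2, so that
   Delta_S X = 2 H N. *)
Definition unit_normal (Xs Xt : vec3) : vec3 :=
  vscal (/ vnorm (vcross Xs Xt)) (vcross Xs Xt).

Definition mean_curv (Xs Xt Xss Xst Xtt : vec3) : R :=
  let N := unit_normal Xs Xt in
  let E := vdot Xs Xs in let F := vdot Xs Xt in let G := vdot Xt Xt in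
  let e := vdot Xss N in let f := vdot Xst N in let g := vdot Xtt N in
  (e * G - 2 * f * F + g * E) / (2 * (E * G - F * F)).

(* X : (s0,s1) x (t0,t1) -> R^3 is a regular parametrized surface which is
   phi-minimal for the log-linear density with density vector v, i.e.
   H = 1/2 <N, v> at every point. *)
Definition phi_minimal_param (v : vec3) (s0 s1 t0 t1 : R) (X : R -> R -> vec3) : Prop :=
  exists Xs Xt Xss Xst Xtt : R -> R -> vec3,
    forall s t, s0 < s < s1 -> t0 < t < t1 ->
      has_deriv3 (fun u => X u t) s (Xs s t) /\
      has_deriv3 (fun u => X s u) t (Xt s t) /\
      has_deriv3 (fun u => Xs u t) s (Xss s t) /\
      has_deriv3 (fun u => Xs s u) t (Xst s t) /\
      has_deriv3 (fun u => Xt s u) t (Xtt s t) /\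
      vcross (Xs s t) (Xt s t) <> vzero /\
      mean_curv (Xs s t) (Xt s t) (Xss s t) (Xst s t) (Xtt s t)
        = / 2 * vdot (unit_normal (Xs s t) (Xt s t)) v.

Definition cyclic_param (c e1 e2 : R -> vec3) (r : R -> R) (s t : R) : vec3 :=
  vadd (c s) (vscal (r s) (vadd (vscal (cos t) (e1 s)) (vscal (sin t) (e2 s)))).

Definition cyclic_data (s0 s1 : R) (c e1 e2 : R -> vec3) (r : R -> R) : Prop :=
  smooth3_on s0 s1 c /\ smooth3_on s0 s1 e1 /\ smooth3_on s0 s1 e2 /\
  smooth_on s0 s1 r /\
  forall s, s0 < s < s1 ->
    0 < r s /\ vdot (e1 s) (e1 s) = 1 /\ vdot (e2 s) (e2 s) = 1 /\
    vdot (e1 s) (e2 s) = 0.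

From Stdlib Require Import Reals Lra Psatz Classical.
Open Scope R_scope.

(* Expand everything in the orthonormal frame (e1, e2, n) of the s-th circle.  Cleared of
   denominators, phi-minimality along that circle says that a trigonometric polynomial
   of degree 4 in t vanishes on an interval, so all its coefficients vanish.  In complex
   notation the top coefficient is r^4 (al + i be) (b + i d) ((p + i q)^2 + r^2 (b + i d)^2),
   where c' = (p, q, m), v = (al, be, ga) and n' = -(b e1 + d e2).  So wherever the planes
   turn (b + i d <> 0) and v is not normal to them, p + i q = +-i r (b + i d); the degree 3
   coefficients then give m = 0 and r' = 0, and differentiating this description of c'
   once more makes the degree 2 coefficient nonzero.  Where v is normal to the planes on an
   interval, differentiating <v, e1> = <v, e2> = 0 gives n' = 0 directly.  Hence n' = 0
   everywhere and all the planes are parallel. *)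

Lemma derivable_pt_lim_value (f : R -> R) (x l l' : R) :
  derivable_pt_lim f x l -> l = l' -> derivable_pt_lim f x l'.
Proof. intros H ->; exact H. Qed.

Lemma derivable_pt_lim_loc (f g : R -> R) (a b x l : R) :
  a < x < b -> (forall y, a < y < b -> f y = g y) ->
  derivable_pt_lim g x l -> derivable_pt_lim f x l.
Proof.
  intros Hx Hfg Hg eps Heps.
  destruct (Hg eps Heps) as [del Hdel].
  assert (Hpos : 0 < Rmin del (Rmin (x - a) (b - x))).
  { apply Rmin_pos; [apply cond_pos | apply Rmin_pos; lra]. }
  exists (mkposreal _ Hpos). intros h Hh0 Hh. simpl in Hh.
  pose proof (Rmin_l del (Rmin (x - a) (b - x))) as M1.
  pose proof (Rmin_r del (Rmin (x - a) (b - x))) as M2.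
  pose proof (Rmin_l (x - a) (b - x)) as M3.
  pose proof (Rmin_r (x - a) (b - x)) as M4.
  assert (Hxh : a < x + h < b) by (apply Rabs_def2 in Hh; lra).
  rewrite (Hfg (x + h) Hxh), (Hfg x Hx). apply Hdel; [exact Hh0 | lra].
Qed.

Lemma derivable_pt_lim_loc_const (f : R -> R) (a b x k l : R) :
  a < x < b -> (forall y, a < y < b -> f y = k) -> derivable_pt_lim f x l -> l = 0.
Proof.
  intros Hx Hk Hf. apply (uniqueness_limite f x); [exact Hf |].
  apply (derivable_pt_lim_loc f (fun _ => k) a b x 0 Hx Hk), derivable_pt_lim_const.
Qed.

Lemma derive0_const_on (f : R -> R) (a b : R) :
  (forall y, a < y < b -> derivable_pt_lim f y 0) ->
  forall u w, a < u < b -> a < w < b -> f u = f w.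
Proof.
  intros H0.
  assert (Hlt : forall u w, a < u < b -> a < w < b -> u < w -> f u = f w).
  { intros u w Hu Hw Huw.
    destruct (MVT_cor2 f (fun _ => 0) u w Huw) as [z [Ez _]];
      [intros z Hz; apply H0; lra | lra]. }
  intros u w Hu Hw. destruct (Rtotal_order u w) as [Huw | [-> | Hwu]].
  - exact (Hlt u w Hu Hw Huw).
  - reflexivity.
  - symmetry. exact (Hlt w u Hw Hu Hwu).
Qed.

Lemma derivable_pt_pos_locally (f : R -> R) (a b x : R) :
  a < x < b -> derivable_pt f x -> 0 < f x ->
  exists a' b', a <= a' < x /\ x < b' <= b /\ forall y, a' < y < b' -> 0 < f y.
Proof.
  intros Hx Hd Hpos.
  destruct (derivable_continuous_pt f x Hd (f x / 2)) as [del [Hdel Hnear]]; [lra |].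
  exists (Rmax a (x - del)), (Rmin b (x + del)).
  pose proof (Rmax_l a (x - del)). pose proof (Rmax_r a (x - del)).
  pose proof (Rmin_l b (x + del)). pose proof (Rmin_r b (x + del)).
  split; [split; [lra | apply Rmax_lub_lt; lra] |].
  split; [split; [apply Rmin_glb_lt; lra | lra] |].
  intros y Hy. destruct (Req_dec y x) as [-> | Hyx]; [exact Hpos |].
  assert (Hfy : R_dist (f y) (f x) < f x / 2).
  { apply Hnear. split; [split; [exact I | auto] |].
    unfold R_dist. apply Rabs_def1; lra. }
  unfold R_dist in Hfy. apply Rabs_def2 in Hfy. lra.
Qed.

Lemma derivable_pt_sum_sqr (f g : R -> R) (x : R) :
  derivable_pt f x -> derivable_pt g x -> derivable_pt (fun y => f y ^ 2 + g y ^ 2) x.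
Proof.
  intros Hf Hg.
  exact (derivable_pt_plus _ _ _
    (derivable_pt_mult _ _ _ Hf (derivable_pt_mult _ _ _ Hf (derivable_pt_const 1 x)))
    (derivable_pt_mult _ _ _ Hg (derivable_pt_mult _ _ _ Hg (derivable_pt_const 1 x)))).
Qed.

Lemma smooth_on_deriv2 (a b : R) (f : R -> R) : smooth_on a b f ->
  exists f1 f2 : R -> R, forall x, a < x < b ->
    derivable_pt_lim f x (f1 x) /\ derivable_pt_lim f1 x (f2 x).
Proof.
  intros (D & HD0 & HD). exists (D 1%nat), (D 2%nat). intros x Hx.
  split; [rewrite <- HD0 |]; apply HD; exact Hx.
Qed.

Lemma sum_sqr_eq0 (x y : R) : x ^ 2 + y ^ 2 = 0 -> x = 0 /\ y = 0.
Proof. intros H. split; nra. Qed.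

(* (x + i y) (u + i w) = 0 with x + i y <> 0. *)
Lemma cmul_eq0 (x y u w : R) :
  0 < x ^ 2 + y ^ 2 -> x * u - y * w = 0 -> x * w + y * u = 0 -> u = 0 /\ w = 0.
Proof.
  intros Hxy E1 E2. apply sum_sqr_eq0.
  assert (Id : (x ^ 2 + y ^ 2) * (u ^ 2 + w ^ 2) = (x * u - y * w) ^ 2 + (x * w + y * u) ^ 2)
    by ring.
  rewrite E1, E2 in Id. nra.
Qed.

Lemma vec3_eq (u w : vec3) : vx u = vx w -> vy u = vy w -> vz u = vz w -> u = w.
Proof. destruct u, w; simpl; intros -> -> ->; reflexivity. Qed.

Ltac vec3_ring := apply vec3_eq; unfold vadd, vscal, vcross, vdot, vzero; simpl; ring.

Lemma vdot_comm (u w : vec3) : vdot u w = vdot w u.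
Proof. unfold vdot; ring. Qed.

Lemma vdot_self_pos (w : vec3) : w <> vzero -> 0 < vdot w w.
Proof.
  intros Hw. destruct w as [x y z]; unfold vdot; simpl.
  destruct (Req_dec x 0) as [-> | ]; [| nra].
  destruct (Req_dec y 0) as [-> | ]; [| nra].
  destruct (Req_dec z 0) as [-> | ]; [| nra].
  exfalso. apply Hw. reflexivity.
Qed.

Lemma vcross_self (u : vec3) : vcross u u = vzero.
Proof. destruct u; vec3_ring. Qed.

Lemma vcross_vcross (u w : vec3) :
  vcross u (vcross w u) = vadd (vscal (vdot u u) w) (vscal (- vdot u w) u).
Proof. vec3_ring. Qed.

Lemma has_deriv3_ext (f : R -> vec3) (x : R) (d d' : vec3) :
  has_deriv3 f x d -> d = d' -> has_deriv3 f x d'.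
Proof. intros H ->; exact H. Qed.

Lemma has_deriv3_loc (f g : R -> vec3) (a b x : R) (d : vec3) : a < x < b ->
  (forall y, a < y < b -> f y = g y) -> has_deriv3 g x d -> has_deriv3 f x d.
Proof.
  intros Hx Hfg [Dx [Dy Dz]].
  repeat split; eapply derivable_pt_lim_loc; eauto; intros y Hy; rewrite Hfg; auto.
Qed.

Lemma has_deriv3_unique (f : R -> vec3) (x : R) (d d' : vec3) :
  has_deriv3 f x d -> has_deriv3 f x d' -> d = d'.
Proof.
  intros [Dx [Dy Dz]] [Dx' [Dy' Dz']].
  apply vec3_eq; eapply uniqueness_limite; eauto.
Qed.

Lemma has_deriv3_const (w : vec3) (x : R) : has_deriv3 (fun _ => w) x vzero.
Proof. repeat split; apply derivable_pt_lim_const. Qed.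

Lemma has_deriv3_add (f g : R -> vec3) (x : R) (df dg : vec3) :
  has_deriv3 f x df -> has_deriv3 g x dg ->
  has_deriv3 (fun y => vadd (f y) (g y)) x (vadd df dg).
Proof.
  intros [F1 [F2 F3]] [G1 [G2 G3]].
  repeat split; simpl; apply derivable_pt_lim_plus; auto.
Qed.

Lemma has_deriv3_scal (k : R -> R) (f : R -> vec3) (x dk : R) (df : vec3) :
  derivable_pt_lim k x dk -> has_deriv3 f x df ->
  has_deriv3 (fun y => vscal (k y) (f y)) x (vadd (vscal dk (f x)) (vscal (k x) df)).
Proof.
  intros Hk [F1 [F2 F3]].
  repeat split; simpl; apply derivable_pt_lim_mult; auto.
Qed.

Lemma has_deriv3_cross (f g : R -> vec3) (x : R) (df dg : vec3) :
  has_deriv3 f x df -> has_deriv3 g x dg ->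
  has_deriv3 (fun y => vcross (f y) (g y)) x (vadd (vcross df (g x)) (vcross (f x) dg)).
Proof.
  intros [F1 [F2 F3]] [G1 [G2 G3]].
  repeat split; simpl;
    (eapply derivable_pt_lim_value;
     [apply derivable_pt_lim_minus; apply derivable_pt_lim_mult; eauto
     | unfold vcross, vadd; simpl; ring]).
Qed.

Lemma derivable_pt_lim_vdot (f g : R -> vec3) (x : R) (df dg : vec3) :
  has_deriv3 f x df -> has_deriv3 g x dg ->
  derivable_pt_lim (fun y => vdot (f y) (g y)) x (vdot df (g x) + vdot (f x) dg).
Proof.
  intros [F1 [F2 F3]] [G1 [G2 G3]]. unfold vdot.
  eapply derivable_pt_lim_value;
    [repeat apply derivable_pt_lim_plus; apply derivable_pt_lim_mult; eauto | cbv beta; ring].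
Qed.

Lemma vdot_const_deriv (f g : R -> vec3) (a b x k : R) (df dg : vec3) :
  a < x < b -> (forall y, a < y < b -> vdot (f y) (g y) = k) ->
  has_deriv3 f x df -> has_deriv3 g x dg -> vdot df (g x) + vdot (f x) dg = 0.
Proof.
  intros Hx Hk Df Dg.
  exact (derivable_pt_lim_loc_const _ a b x k _ Hx Hk (derivable_pt_lim_vdot f g x df dg Df Dg)).
Qed.

Lemma derivable_pt_vdot (f g : R -> vec3) (x : R) (df dg : vec3) :
  has_deriv3 f x df -> has_deriv3 g x dg -> derivable_pt (fun y => vdot (f y) (g y)) x.
Proof. intros Df Dg. exact (exist _ _ (derivable_pt_lim_vdot f g x df dg Df Dg)). Qed.

Lemma smooth3_on_deriv2 (a b : R) (f : R -> vec3) : smooth3_on a b f ->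
  exists f1 f2 : R -> vec3, forall x, a < x < b ->
    has_deriv3 f x (f1 x) /\ has_deriv3 f1 x (f2 x).
Proof.
  intros (Hx & Hy & Hz).
  destruct (smooth_on_deriv2 _ _ _ Hx) as (x1 & x2 & Dx).
  destruct (smooth_on_deriv2 _ _ _ Hy) as (y1 & y2 & Dy).
  destruct (smooth_on_deriv2 _ _ _ Hz) as (z1 & z2 & Dz).
  exists (fun u => V3 (x1 u) (y1 u) (z1 u)), (fun u => V3 (x2 u) (y2 u) (z2 u)).
  intros u Hu. destruct (Dx u Hu), (Dy u Hu), (Dz u Hu). repeat split; assumption.
Qed.

(** * Trigonometric polynomials of degree 4 *)

Definition harmonic (k a b t : R) : R := a * cos (k * t) + b * sin (k * t).

Lemma derivable_pt_lim_harmonic (k a b t : R) :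
  derivable_pt_lim (harmonic k a b) t (harmonic k (k * b) (- (k * a)) t).
Proof.
  assert (Dk : derivable_pt_lim (fun y => k * y) t k).
  { eapply derivable_pt_lim_value;
      [apply derivable_pt_lim_mult; [apply derivable_pt_lim_const | apply derivable_pt_lim_id]
      | cbv beta; ring]. }
  eapply derivable_pt_lim_value.
  - apply derivable_pt_lim_plus; apply derivable_pt_lim_mult; try apply derivable_pt_lim_const.
    + exact (derivable_pt_lim_comp _ cos t k _ Dk (derivable_pt_lim_cos _)).
    + exact (derivable_pt_lim_comp _ sin t k _ Dk (derivable_pt_lim_sin _)).
  - unfold harmonic. cbv beta. ring.
Qed.

Lemma harmonic_eq0 (k a b t : R) :
  harmonic k a b t = 0 -> harmonic k b (- a) t = 0 -> a = 0 /\ b = 0.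
Proof.
  unfold harmonic. intros Hg Hh. pose proof (sin2_cos2 (k * t)) as Hsc. unfold Rsqr in Hsc.
  assert (Ea : a = cos (k * t) * (a * cos (k * t) + b * sin (k * t))
                   - sin (k * t) * (b * cos (k * t) + - a * sin (k * t))).
  { transitivity (a * (sin (k * t) * sin (k * t) + cos (k * t) * cos (k * t)));
      [rewrite Hsc | ]; ring. }
  assert (Eb : b = sin (k * t) * (a * cos (k * t) + b * sin (k * t))
                   + cos (k * t) * (b * cos (k * t) + - a * sin (k * t))).
  { transitivity (b * (sin (k * t) * sin (k * t) + cos (k * t) * cos (k * t)));
      [rewrite Hsc | ]; ring. }
  rewrite Hg, Hh in Ea, Eb. split; lra.
Qed.

Record trig4 : Type := Trig4
  { ta0 : R; ta1 : R; tb1 : R; ta2 : R; tb2 : R; ta3 : R; tb3 : R; ta4 : R; tb4 : R }.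

Definition trig4_eval (T : trig4) (t : R) : R :=
  ta0 T + harmonic 1 (ta1 T) (tb1 T) t + harmonic 2 (ta2 T) (tb2 T) t
  + harmonic 3 (ta3 T) (tb3 T) t + harmonic 4 (ta4 T) (tb4 T) t.

Definition trig4_deriv (T : trig4) : trig4 :=
  Trig4 0 (1 * tb1 T) (- (1 * ta1 T)) (2 * tb2 T) (- (2 * ta2 T))
    (3 * tb3 T) (- (3 * ta3 T)) (4 * tb4 T) (- (4 * ta4 T)).

Lemma derivable_pt_lim_trig4 (T : trig4) (t : R) :
  derivable_pt_lim (trig4_eval T) t (trig4_eval (trig4_deriv T) t).
Proof.
  eapply derivable_pt_lim_value.
  - unfold trig4_eval.
    repeat (apply derivable_pt_lim_plus; [| apply derivable_pt_lim_harmonic]).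
    apply derivable_pt_lim_const.
  - unfold trig4_eval, trig4_deriv, harmonic; simpl. ring.
Qed.

Lemma trig4_iter_deriv_eq0 (n : nat) (T : trig4) (a b : R) :
  (forall t, a < t < b -> trig4_eval T t = 0) ->
  forall t, a < t < b -> trig4_eval (Nat.iter n trig4_deriv T) t = 0.
Proof.
  induction n as [| n IH]; intros H0 t Ht; simpl; [auto |].
  apply (derivable_pt_lim_loc_const _ a b t 0 _ Ht (IH H0)), derivable_pt_lim_trig4.
Qed.

Local Ltac deriv_at E n :=
  rewrite <- (E n); unfold trig4_eval; simpl;
  repeat match goal with x := _ |- _ => subst x end; unfold harmonic; ring.

(* The even (resp. odd) derivatives at one point give a Vandermonde system in the
   values of the harmonics (resp. of their conjugates). *)
Lemma trig4_eq0 (T : trig4) (a b : R) : a < b ->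
  (forall t, a < t < b -> trig4_eval T t = 0) ->
  ta0 T = 0 /\ ta1 T = 0 /\ tb1 T = 0 /\ ta2 T = 0 /\ tb2 T = 0 /\
  ta3 T = 0 /\ tb3 T = 0 /\ ta4 T = 0 /\ tb4 T = 0.
Proof.
  intros Hab H0. set (t := (a + b) / 2).
  pose proof (fun n => trig4_iter_deriv_eq0 n T a b H0 t ltac:(unfold t; lra)) as E.
  destruct T as [a0 a1 b1 a2 b2 a3 b3 a4 b4]; simpl.
  set (g1 := harmonic 1 a1 b1 t). set (g2 := harmonic 2 a2 b2 t).
  set (g3 := harmonic 3 a3 b3 t). set (g4 := harmonic 4 a4 b4 t).
  set (h1 := harmonic 1 b1 (- a1) t). set (h2 := harmonic 2 b2 (- a2) t).
  set (h3 := harmonic 3 b3 (- a3) t). set (h4 := harmonic 4 b4 (- a4) t).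
  assert (E0 : a0 + g1 + g2 + g3 + g4 = 0) by deriv_at E 0%nat.
  assert (E2 : - g1 - 4 * g2 - 9 * g3 - 16 * g4 = 0) by deriv_at E 2%nat.
  assert (E4 : g1 + 16 * g2 + 81 * g3 + 256 * g4 = 0) by deriv_at E 4%nat.
  assert (E6 : - g1 - 64 * g2 - 729 * g3 - 4096 * g4 = 0) by deriv_at E 6%nat.
  assert (E8 : g1 + 256 * g2 + 6561 * g3 + 65536 * g4 = 0) by deriv_at E 8%nat.
  assert (E1 : h1 + 2 * h2 + 3 * h3 + 4 * h4 = 0) by deriv_at E 1%nat.
  assert (E3 : - h1 - 8 * h2 - 27 * h3 - 64 * h4 = 0) by deriv_at E 3%nat.
  assert (E5 : h1 + 32 * h2 + 243 * h3 + 1024 * h4 = 0) by deriv_at E 5%nat.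
  assert (E7 : - h1 - 128 * h2 - 2187 * h3 - 16384 * h4 = 0) by deriv_at E 7%nat.
  assert (E9 : h1 + 512 * h2 + 19683 * h3 + 262144 * h4 = 0) by deriv_at E 9%nat.
  assert (Z : g1 = 0 /\ g2 = 0 /\ g3 = 0 /\ g4 = 0 /\ h1 = 0 /\ h2 = 0 /\ h3 = 0 /\ h4 = 0)
    by (repeat split; lra).
  destruct Z as (G1 & G2 & G3 & G4 & K1 & K2 & K3 & K4).
  destruct (harmonic_eq0 _ _ _ _ G1 K1), (harmonic_eq0 _ _ _ _ G2 K2),
    (harmonic_eq0 _ _ _ _ G3 K3), (harmonic_eq0 _ _ _ _ G4 K4).
  repeat split; auto; lra.
Qed.

Definition trig4_poly (T : trig4) (C S : R) : R :=
  ta0 T + ta1 T * C + tb1 T * S + ta2 T * (C ^ 2 - S ^ 2) + tb2 T * (2 * C * S)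
  + ta3 T * (C ^ 3 - 3 * C * S ^ 2) + tb3 T * (3 * C ^ 2 * S - S ^ 3)
  + ta4 T * (C ^ 4 - 6 * C ^ 2 * S ^ 2 + S ^ 4) + tb4 T * (4 * C ^ 3 * S - 4 * C * S ^ 3).

Lemma trig4_eval_poly (T : trig4) (t : R) : trig4_eval T t = trig4_poly T (cos t) (sin t).
Proof.
  assert (C2 : cos (2 * t) = cos t ^ 2 - sin t ^ 2)
    by (replace (2 * t) with (t + t) by ring; rewrite cos_plus; ring).
  assert (S2 : sin (2 * t) = 2 * cos t * sin t)
    by (replace (2 * t) with (t + t) by ring; rewrite sin_plus; ring).
  assert (C3 : cos (3 * t) = cos t ^ 3 - 3 * cos t * sin t ^ 2)
    by (replace (3 * t) with (2 * t + t) by ring; rewrite cos_plus, C2, S2; ring).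
  assert (S3 : sin (3 * t) = 3 * cos t ^ 2 * sin t - sin t ^ 3)
    by (replace (3 * t) with (2 * t + t) by ring; rewrite sin_plus, C2, S2; ring).
  assert (C4 : cos (4 * t) = cos t ^ 4 - 6 * cos t ^ 2 * sin t ^ 2 + sin t ^ 4)
    by (replace (4 * t) with (2 * t + 2 * t) by ring; rewrite cos_plus, C2, S2; ring).
  assert (S4 : sin (4 * t) = 4 * cos t ^ 3 * sin t - 4 * cos t * sin t ^ 3)
    by (replace (4 * t) with (2 * t + 2 * t) by ring; rewrite sin_plus, C2, S2; ring).
  unfold trig4_eval, trig4_poly, harmonic. rewrite C2, S2, C3, S3, C4, S4, !Rmult_1_l. ring.
Qed.

(** * Orthonormal frames *)

Definition frame (e1 e2 x : vec3) : vec3 :=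
  vadd (vscal (vx x) e1) (vadd (vscal (vy x) e2) (vscal (vz x) (vcross e1 e2))).

Lemma frame_add (e1 e2 x y : vec3) : vadd (frame e1 e2 x) (frame e1 e2 y) = frame e1 e2 (vadd x y).
Proof. destruct e1, e2, x, y; vec3_ring. Qed.

Lemma frame_scal (e1 e2 x : vec3) (k : R) : vscal k (frame e1 e2 x) = frame e1 e2 (vscal k x).
Proof. destruct e1, e2, x; vec3_ring. Qed.

Lemma frame_zero (e1 e2 : vec3) : frame e1 e2 vzero = vzero.
Proof. destruct e1, e2; vec3_ring. Qed.

Lemma frame_basis1 (e1 e2 : vec3) : frame e1 e2 (V3 1 0 0) = e1.
Proof. destruct e1, e2; vec3_ring. Qed.

Lemma frame_basis2 (e1 e2 : vec3) : frame e1 e2 (V3 0 1 0) = e2.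
Proof. destruct e1, e2; vec3_ring. Qed.

Lemma frame_basis3 (e1 e2 : vec3) : frame e1 e2 (V3 0 0 1) = vcross e1 e2.
Proof. destruct e1, e2; vec3_ring. Qed.

Lemma frame_scal_e1 (e1 e2 : vec3) (k : R) : vscal k e1 = frame e1 e2 (V3 k 0 0).
Proof. destruct e1, e2; vec3_ring. Qed.

Lemma frame_scal_e2 (e1 e2 : vec3) (k : R) : vscal k e2 = frame e1 e2 (V3 0 k 0).
Proof. destruct e1, e2; vec3_ring. Qed.

Section OrthonormalFrame.
Variables e1 e2 : vec3.
Hypothesis H11 : vdot e1 e1 = 1.
Hypothesis H22 : vdot e2 e2 = 1.
Hypothesis H12 : vdot e1 e2 = 0.

Let n := vcross e1 e2.

Lemma vdot_normal_normal : vdot n n = 1.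
Proof.
  transitivity (vdot e1 e1 * vdot e2 e2 - vdot e1 e2 * vdot e1 e2);
    [unfold n; destruct e1, e2; unfold vdot, vcross; simpl; ring | rewrite H11, H22, H12; ring].
Qed.

Lemma vcross_e2_normal : vcross e2 n = e1.
Proof.
  unfold n. rewrite vcross_vcross, H22, (vdot_comm e2 e1), H12. destruct e1, e2; vec3_ring.
Qed.

Lemma vcross_normal_e1 : vcross n e1 = e2.
Proof.
  transitivity (vcross e1 (vcross e2 e1)); [unfold n; destruct e1, e2; vec3_ring |].
  rewrite vcross_vcross, H11, H12. destruct e1, e2; vec3_ring.
Qed.

Lemma vdot_frame (x y : vec3) : vdot (frame e1 e2 x) (frame e1 e2 y) = vdot x y.
Proof.
  assert (N1 : vdot n e1 = 0) by (unfold n; destruct e1, e2; unfold vdot, vcross; simpl; ring).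
  assert (N2 : vdot n e2 = 0) by (unfold n; destruct e1, e2; unfold vdot, vcross; simpl; ring).
  pose proof vdot_normal_normal as NN.
  transitivity (vx x * vx y * vdot e1 e1 + vy x * vy y * vdot e2 e2 + vz x * vz y * vdot n n
    + (vx x * vy y + vy x * vx y) * vdot e1 e2 + (vx x * vz y + vz x * vx y) * vdot n e1
    + (vy x * vz y + vz x * vy y) * vdot n e2).
  - unfold frame. fold n. destruct e1, e2, n, x, y; unfold vdot, vadd, vscal; simpl; ring.
  - rewrite NN, N1, N2, H11, H22, H12. unfold vdot; ring.
Qed.

Lemma vcross_frame (x y : vec3) :
  vcross (frame e1 e2 x) (frame e1 e2 y) = frame e1 e2 (vcross x y).
Proof.
  assert (Bilin : vcross (frame e1 e2 x) (frame e1 e2 y) =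
    vadd (vscal (vy x * vz y - vz x * vy y) (vcross e2 n))
      (vadd (vscal (vz x * vx y - vx x * vz y) (vcross n e1))
        (vscal (vx x * vy y - vy x * vx y) n)))
    by (unfold frame, n; destruct e1, e2, x, y; vec3_ring).
  rewrite Bilin, vcross_e2_normal, vcross_normal_e1.
  unfold frame. fold n. destruct x, y; vec3_ring.
Qed.

Lemma frame_coords (w : vec3) : w = frame e1 e2 (V3 (vdot w e1) (vdot w e2) (vdot w n)).
Proof.
  assert (Triple : forall a b c : vec3,
    vscal (vdot a (vcross b c)) w =
    vadd (vscal (vdot w a) (vcross b c))
      (vadd (vscal (vdot w b) (vcross c a)) (vscal (vdot w c) (vcross a b)))).
  { intros a b c. destruct a, b, c, w; vec3_ring. }
  pose proof (Triple e1 e2 n) as T.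
  rewrite vcross_e2_normal, vcross_normal_e1, H11 in T.
  transitivity (vscal 1 w); [destruct w; vec3_ring | exact T].
Qed.

End OrthonormalFrame.

(** * The equation along one circle *)

(* |W|^3 (2 H - <N, v>) with W = Xs x Xt, using |W|^2 = EG - F^2. *)
Definition phi_mc_numer (Xs Xt Xss Xst Xtt v : vec3) : R :=
  let W := vcross Xs Xt in
  vdot Xt Xt * vdot Xss W - 2 * vdot Xs Xt * vdot Xst W + vdot Xs Xs * vdot Xtt W
  - vdot W v * vdot W W.

Lemma phi_mc_numer_eq0 (Xs Xt Xss Xst Xtt v : vec3) :
  vcross Xs Xt <> vzero ->
  mean_curv Xs Xt Xss Xst Xtt = / 2 * vdot (unit_normal Xs Xt) v ->
  phi_mc_numer Xs Xt Xss Xst Xtt v = 0.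
Proof.
  intros Hn H. unfold mean_curv, unit_normal in H. unfold phi_mc_numer.
  set (W := vcross Xs Xt) in *.
  assert (HW : 0 < vdot W W) by (apply vdot_self_pos; auto).
  set (L := vnorm W) in *.
  assert (HL : 0 < L) by (unfold L, vnorm; apply sqrt_lt_R0; auto).
  assert (HLL : L * L = vdot W W) by (unfold L, vnorm; apply sqrt_sqrt; lra).
  assert (Lagrange : vdot Xs Xs * vdot Xt Xt - vdot Xs Xt * vdot Xs Xt = vdot W W)
    by (unfold W; destruct Xs, Xt; unfold vdot, vcross; simpl; ring).
  assert (Sr : forall k Y, vdot Y (vscal k W) = k * vdot Y W)
    by (intros; destruct Y, W; unfold vdot, vscal; simpl; ring).
  assert (Sl : forall k Y, vdot (vscal k W) Y = k * vdot W Y)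
    by (intros; destruct Y, W; unfold vdot, vscal; simpl; ring).
  cbv zeta in H. rewrite !Sr, Sl, Lagrange in H.
  set (e := vdot Xss W) in *. set (f := vdot Xst W) in *. set (g := vdot Xtt W) in *.
  set (E := vdot Xs Xs) in *. set (F := vdot Xs Xt) in *. set (G := vdot Xt Xt) in *.
  set (WW := vdot W W) in *.
  replace (G * e - 2 * F * f + E * g) with (2 * L * WW * ((/ L * e * G - 2 * (/ L * f) * F
    + / L * g * E) / (2 * WW))) by (field; lra).
  rewrite H, <- HLL. field. lra.
Qed.

Lemma phi_mc_numer_frame (e1 e2 x1 x2 x3 x4 x5 x6 : vec3) :
  vdot e1 e1 = 1 -> vdot e2 e2 = 1 -> vdot e1 e2 = 0 ->
  phi_mc_numer (frame e1 e2 x1) (frame e1 e2 x2) (frame e1 e2 x3) (frame e1 e2 x4)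
    (frame e1 e2 x5) (frame e1 e2 x6)
  = phi_mc_numer x1 x2 x3 x4 x5 x6.
Proof.
  intros H11 H22 H12. unfold phi_mc_numer. rewrite !vcross_frame, !vdot_frame by auto.
  reflexivity.
Qed.

(* Frame coordinates, in the frame (e1, e2, n = e1 x e2) of one circle, of the
   second-order data of the family at that circle: c' = (p, q, m), e1' = (0, a, b),
   e2' = (-a, 0, d), e1'' = (-(a^2 + b^2), g2, g3), n-component h3 of e2'',
   c'' = (k1, k2, k3), the radius r with r' = r1 and r'' = r2, and the density
   vector v = (al, be, ga). *)
Record jet : Type := Jet
  { jp : R; jq : R; jm : R; ja : R; jb : R; jd : R; jg2 : R; jg3 : R; jh3 : R;
    jk1 : R; jk2 : R; jk3 : R; jr : R; jr1 : R; jr2 : R; jal : R; jbe : R; jga : R }.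

(* The partial derivatives of X at the point of angle t, C = cos t and S = sin t,
   in frame coordinates. *)
Definition jet_Xs (J : jet) (C S : R) : vec3 :=
  let 'Jet p q m a b d _ _ _ _ _ _ r r1 _ _ _ _ := J in
  V3 (p + r1 * C - r * a * S) (q + r1 * S + r * a * C) (m + r * (b * C + d * S)).

Definition jet_Xt (J : jet) (C S : R) : vec3 := V3 (- jr J * S) (jr J * C) 0.

Definition jet_Xss (J : jet) (C S : R) : vec3 :=
  let 'Jet _ _ _ a b d g2 g3 h3 k1 k2 k3 r r1 r2 _ _ _ := J in
  V3 (k1 + r2 * C + 2 * r1 * (- a * S) + r * (C * (- (a ^ 2 + b ^ 2)) + S * (- 2 * b * d - g2)))
     (k2 + r2 * S + 2 * r1 * (a * C) + r * (C * g2 + S * (- (a ^ 2 + d ^ 2))))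
     (k3 + 2 * r1 * (b * C + d * S) + r * (C * g3 + S * h3)).

Definition jet_Xst (J : jet) (C S : R) : vec3 :=
  let 'Jet _ _ _ a b d _ _ _ _ _ _ r r1 _ _ _ _ := J in
  V3 (- r1 * S + r * (- a * C)) (r1 * C + r * (- a * S)) (r * (- b * S + d * C)).

Definition jet_Xtt (J : jet) (C S : R) : vec3 := V3 (- jr J * C) (- jr J * S) 0.

Definition jet_phi_mc_numer (J : jet) (C S : R) : R :=
  phi_mc_numer (jet_Xs J C S) (jet_Xt J C S) (jet_Xss J C S) (jet_Xst J C S) (jet_Xtt J C S)
    (V3 (jal J) (jbe J) (jga J)).

Definition circle_harmonics (J : jet) : trig4 :=
  let 'Jet p q m a b d _ g3 h3 k1 k2 k3 r r1 r2 al be ga := J in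
  Trig4
   (8 * a * b * q * r^4 - 8 * a * d * p * r^4 + 3 * al * b * d^2 * r^6
     + 12 * al * b * m^2 * r^4 + 3 * al * b * p^2 * r^4 + al * b * q^2 * r^4
     + 4 * al * b * r^4 * r1^2 + 3 * al * b^3 * r^6 + 2 * al * d * p * q * r^4
     + 8 * al * m * p * r^3 * r1 + 2 * b * be * p * q * r^4 - 8 * b * ga * m * p * r^4
     - 4 * b * k1 * r^4 + 8 * b * p * r^3 * r1 + 3 * b^2 * be * d * r^6
     - 4 * b^2 * ga * r^5 * r1 + 16 * b^2 * m * r^4 + 12 * be * d * m^2 * r^4
     + be * d * p^2 * r^4 + 3 * be * d * q^2 * r^4 + 4 * be * d * r^4 * r1^2
     + 3 * be * d^3 * r^6 + 8 * be * m * q * r^3 * r1 - 8 * d * ga * m * q * r^4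
     - 4 * d * k2 * r^4 + 8 * d * q * r^3 * r1 - 4 * d^2 * ga * r^5 * r1 + 16 * d^2 * m * r^4
     + 4 * g3 * p * r^4 - 8 * ga * m^2 * r^3 * r1 - 12 * ga * p^2 * r^3 * r1
     - 12 * ga * q^2 * r^3 * r1 - 8 * ga * r^3 * r1^3 + 4 * h3 * q * r^4 + 8 * k3 * r^3 * r1
     + 8 * m * p^2 * r^2 + 8 * m * q^2 * r^2 + 8 * m * r^2 * r1^2 - 8 * m * r^3 * r2
     + 8 * m^3 * r^2)
   (- 16 * a * d * r^4 * r1 + 12 * al * b * p * r^4 * r1 + 18 * al * b^2 * m * r^5
     + 4 * al * d * q * r^4 * r1 + 6 * al * d^2 * m * r^5 + 6 * al * m * p^2 * r^3
     + 2 * al * m * q^2 * r^3 + 8 * al * m * r^3 * r1^2 + 8 * al * m^3 * r^3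
     + 12 * b * be * d * m * r^5 + 4 * b * be * q * r^4 * r1 - 4 * b * d * ga * q * r^5
     + 12 * b * d^2 * r^5 - 16 * b * ga * m * r^4 * r1 + 24 * b * m^2 * r^3 + 4 * b * p^2 * r^3
     + 12 * b * q^2 * r^3 + 24 * b * r^3 * r1^2 - 8 * b * r^4 * r2 - 6 * b^2 * ga * p * r^5
     + 12 * b^3 * r^5 + 4 * be * d * p * r^4 * r1 + 4 * be * m * p * q * r^3
     - 8 * d * p * q * r^3 - 2 * d^2 * ga * p * r^5 + 8 * g3 * r^4 * r1 - 8 * ga * m^2 * p * r^3
     - 6 * ga * p * q^2 * r^3 - 24 * ga * p * r^3 * r1^2 - 6 * ga * p^3 * r^3 - 8 * k1 * m * r^3
     + 8 * k3 * p * r^3 + 16 * m * p * r^2 * r1)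
   (16 * a * b * r^4 * r1 + 12 * al * b * d * m * r^5 + 4 * al * b * q * r^4 * r1
     + 4 * al * d * p * r^4 * r1 + 4 * al * m * p * q * r^3 + 4 * b * be * p * r^4 * r1
     - 4 * b * d * ga * p * r^5 - 8 * b * p * q * r^3 + 6 * b^2 * be * m * r^5
     + 12 * b^2 * d * r^5 - 2 * b^2 * ga * q * r^5 + 12 * be * d * q * r^4 * r1
     + 18 * be * d^2 * m * r^5 + 2 * be * m * p^2 * r^3 + 6 * be * m * q^2 * r^3
     + 8 * be * m * r^3 * r1^2 + 8 * be * m^3 * r^3 - 16 * d * ga * m * r^4 * r1
     + 24 * d * m^2 * r^3 + 12 * d * p^2 * r^3 + 4 * d * q^2 * r^3 + 24 * d * r^3 * r1^2
     - 8 * d * r^4 * r2 - 6 * d^2 * ga * q * r^5 + 12 * d^3 * r^5 - 8 * ga * m^2 * q * r^3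
     - 6 * ga * p^2 * q * r^3 - 24 * ga * q * r^3 * r1^2 - 6 * ga * q^3 * r^3
     + 8 * h3 * r^4 * r1 - 8 * k2 * m * r^3 + 8 * k3 * q * r^3 + 16 * m * q * r^2 * r1)
   (- 8 * a * b * q * r^4 - 8 * a * d * p * r^4 + 12 * al * b * m^2 * r^4
     + 4 * al * b * p^2 * r^4 + 4 * al * b * r^4 * r1^2 + 4 * al * b^3 * r^6
     + 8 * al * m * p * r^3 * r1 - 8 * b * ga * m * p * r^4 - 4 * b * k1 * r^4
     + 24 * b * p * r^3 * r1 - 4 * b^2 * ga * r^5 * r1 + 16 * b^2 * m * r^4
     - 12 * be * d * m^2 * r^4 - 4 * be * d * q^2 * r^4 - 4 * be * d * r^4 * r1^2
     - 4 * be * d^3 * r^6 - 8 * be * m * q * r^3 * r1 + 8 * d * ga * m * q * r^4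
     + 4 * d * k2 * r^4 - 24 * d * q * r^3 * r1 + 4 * d^2 * ga * r^5 * r1 - 16 * d^2 * m * r^4
     + 4 * g3 * p * r^4 - 12 * ga * p^2 * r^3 * r1 + 12 * ga * q^2 * r^3 * r1 - 4 * h3 * q * r^4)
   (8 * a * b * p * r^4 - 8 * a * d * q * r^4 + 4 * al * b * p * q * r^4
     + 6 * al * b^2 * d * r^6 + 12 * al * d * m^2 * r^4 + 2 * al * d * p^2 * r^4
     + 2 * al * d * q^2 * r^4 + 4 * al * d * r^4 * r1^2 + 2 * al * d^3 * r^6
     + 8 * al * m * q * r^3 * r1 + 6 * b * be * d^2 * r^6 + 12 * b * be * m^2 * r^4
     + 2 * b * be * p^2 * r^4 + 2 * b * be * q^2 * r^4 + 4 * b * be * r^4 * r1^2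
     - 8 * b * d * ga * r^5 * r1 + 32 * b * d * m * r^4 - 8 * b * ga * m * q * r^4
     - 4 * b * k2 * r^4 + 24 * b * q * r^3 * r1 + 2 * b^3 * be * r^6 + 4 * be * d * p * q * r^4
     + 8 * be * m * p * r^3 * r1 - 8 * d * ga * m * p * r^4 - 4 * d * k1 * r^4
     + 24 * d * p * r^3 * r1 + 4 * g3 * q * r^4 - 24 * ga * p * q * r^3 * r1 + 4 * h3 * p * r^4)
   (4 * al * b * p * r^4 * r1 + 6 * al * b^2 * m * r^5 - 4 * al * d * q * r^4 * r1
     - 6 * al * d^2 * m * r^5 + 2 * al * m * p^2 * r^3 - 2 * al * m * q^2 * r^3
     - 12 * b * be * d * m * r^5 - 4 * b * be * q * r^4 * r1 + 4 * b * d * ga * q * r^5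
     - 12 * b * d^2 * r^5 + 4 * b * p^2 * r^3 - 4 * b * q^2 * r^3 - 2 * b^2 * ga * p * r^5
     + 4 * b^3 * r^5 - 4 * be * d * p * r^4 * r1 - 4 * be * m * p * q * r^3
     - 8 * d * p * q * r^3 + 2 * d^2 * ga * p * r^5 + 6 * ga * p * q^2 * r^3
     - 2 * ga * p^3 * r^3)
   (12 * al * b * d * m * r^5 + 4 * al * b * q * r^4 * r1 + 4 * al * d * p * r^4 * r1
     + 4 * al * m * p * q * r^3 + 4 * b * be * p * r^4 * r1 - 4 * b * d * ga * p * r^5
     + 8 * b * p * q * r^3 + 6 * b^2 * be * m * r^5 + 12 * b^2 * d * r^5
     - 2 * b^2 * ga * q * r^5 - 4 * be * d * q * r^4 * r1 - 6 * be * d^2 * m * r^5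
     + 2 * be * m * p^2 * r^3 - 2 * be * m * q^2 * r^3 + 4 * d * p^2 * r^3 - 4 * d * q^2 * r^3
     + 2 * d^2 * ga * q * r^5 - 4 * d^3 * r^5 - 6 * ga * p^2 * q * r^3 + 2 * ga * q^3 * r^3)
   (- 3 * al * b * d^2 * r^6 + al * b * p^2 * r^4 - al * b * q^2 * r^4 + al * b^3 * r^6
     - 2 * al * d * p * q * r^4 - 2 * b * be * p * q * r^4 - 3 * b^2 * be * d * r^6
     - be * d * p^2 * r^4 + be * d * q^2 * r^4 + be * d^3 * r^6)
   (2 * al * b * p * q * r^4 + 3 * al * b^2 * d * r^6 + al * d * p^2 * r^4 - al * d * q^2 * r^4
     - al * d^3 * r^6 - 3 * b * be * d^2 * r^6 + b * be * p^2 * r^4 - b * be * q^2 * r^4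
     + b^3 * be * r^6 - 2 * be * d * p * q * r^4).

Definition circle_cofactor (J : jet) (C S : R) : R :=
  let 'Jet p q m a b d _ g3 h3 k1 k2 k3 r r1 r2 al be ga := J in
  16 * C * S * a * b * p * r^4 - 16 * C * S * a * d * q * r^4 + 8 * C * S * al * b * p * q * r^4
  + 12 * C * S * al * b^2 * d * r^6 + 24 * C * S * al * d * m^2 * r^4
  + 4 * C * S * al * d * p^2 * r^4 + 4 * C * S * al * d * q^2 * r^4
  + 8 * C * S * al * d * r^4 * r1^2 + 4 * C * S * al * d^3 * r^6
  + 16 * C * S * al * m * q * r^3 * r1 + 12 * C * S * b * be * d^2 * r^6
  + 24 * C * S * b * be * m^2 * r^4 + 4 * C * S * b * be * p^2 * r^4
  + 4 * C * S * b * be * q^2 * r^4 + 8 * C * S * b * be * r^4 * r1^2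
  - 16 * C * S * b * d * ga * r^5 * r1 + 64 * C * S * b * d * m * r^4
  - 16 * C * S * b * ga * m * q * r^4 - 8 * C * S * b * k2 * r^4 + 48 * C * S * b * q * r^3 * r1
  + 4 * C * S * b^3 * be * r^6 + 8 * C * S * be * d * p * q * r^4
  + 16 * C * S * be * m * p * r^3 * r1 - 16 * C * S * d * ga * m * p * r^4
  - 8 * C * S * d * k1 * r^4 + 48 * C * S * d * p * r^3 * r1 + 8 * C * S * g3 * q * r^4
  - 48 * C * S * ga * p * q * r^3 * r1 + 8 * C * S * h3 * p * r^4
  - 16 * C * S^2 * a * d * r^4 * r1 + 16 * C * S^2 * al * d * q * r^4 * r1
  + 24 * C * S^2 * al * d^2 * m * r^5 + 8 * C * S^2 * al * m * r^3 * r1^2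
  + 48 * C * S^2 * b * be * d * m * r^5 + 16 * C * S^2 * b * be * q * r^4 * r1
  - 16 * C * S^2 * b * d * ga * q * r^5 + 48 * C * S^2 * b * d^2 * r^5
  - 16 * C * S^2 * b * ga * m * r^4 * r1 + 24 * C * S^2 * b * r^3 * r1^2
  - 8 * C * S^2 * b * r^4 * r2 + 16 * C * S^2 * be * d * p * r^4 * r1
  - 8 * C * S^2 * d^2 * ga * p * r^5 + 8 * C * S^2 * g3 * r^4 * r1
  - 24 * C * S^2 * ga * p * r^3 * r1^2 + 8 * C * S^3 * al * d * r^4 * r1^2
  + 8 * C * S^3 * al * d^3 * r^6 + 24 * C * S^3 * b * be * d^2 * r^6
  + 8 * C * S^3 * b * be * r^4 * r1^2 - 16 * C * S^3 * b * d * ga * r^5 * r1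
  - 16 * C * a * d * r^4 * r1 + 12 * C * al * b * p * r^4 * r1 + 18 * C * al * b^2 * m * r^5
  + 4 * C * al * d * q * r^4 * r1 + 6 * C * al * d^2 * m * r^5 + 6 * C * al * m * p^2 * r^3
  + 2 * C * al * m * q^2 * r^3 + 8 * C * al * m * r^3 * r1^2 + 8 * C * al * m^3 * r^3
  + 12 * C * b * be * d * m * r^5 + 4 * C * b * be * q * r^4 * r1 - 4 * C * b * d * ga * q * r^5
  + 12 * C * b * d^2 * r^5 - 16 * C * b * ga * m * r^4 * r1 + 24 * C * b * m^2 * r^3
  + 4 * C * b * p^2 * r^3 + 12 * C * b * q^2 * r^3 + 24 * C * b * r^3 * r1^2
  - 8 * C * b * r^4 * r2 - 6 * C * b^2 * ga * p * r^5 + 12 * C * b^3 * r^5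
  + 4 * C * be * d * p * r^4 * r1 + 4 * C * be * m * p * q * r^3 - 8 * C * d * p * q * r^3
  - 2 * C * d^2 * ga * p * r^5 + 8 * C * g3 * r^4 * r1 - 8 * C * ga * m^2 * p * r^3
  - 6 * C * ga * p * q^2 * r^3 - 24 * C * ga * p * r^3 * r1^2 - 6 * C * ga * p^3 * r^3
  - 8 * C * k1 * m * r^3 + 8 * C * k3 * p * r^3 + 16 * C * m * p * r^2 * r1
  + 16 * C^2 * S * a * b * r^4 * r1 + 48 * C^2 * S * al * b * d * m * r^5
  + 16 * C^2 * S * al * b * q * r^4 * r1 + 16 * C^2 * S * al * d * p * r^4 * r1
  + 16 * C^2 * S * b * be * p * r^4 * r1 - 16 * C^2 * S * b * d * ga * p * r^5
  + 24 * C^2 * S * b^2 * be * m * r^5 + 48 * C^2 * S * b^2 * d * r^5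
  - 8 * C^2 * S * b^2 * ga * q * r^5 + 8 * C^2 * S * be * m * r^3 * r1^2
  - 16 * C^2 * S * d * ga * m * r^4 * r1 + 24 * C^2 * S * d * r^3 * r1^2
  - 8 * C^2 * S * d * r^4 * r2 - 24 * C^2 * S * ga * q * r^3 * r1^2
  + 8 * C^2 * S * h3 * r^4 * r1 + 24 * C^2 * S^2 * al * b * d^2 * r^6
  + 8 * C^2 * S^2 * al * b * r^4 * r1^2 + 24 * C^2 * S^2 * b^2 * be * d * r^6
  - 8 * C^2 * S^2 * b^2 * ga * r^5 * r1 + 8 * C^2 * S^2 * be * d * r^4 * r1^2
  - 8 * C^2 * S^2 * d^2 * ga * r^5 * r1 - 16 * C^2 * S^2 * ga * r^3 * r1^3
  - 16 * C^2 * a * d * p * r^4 + 3 * C^2 * al * b * d^2 * r^6 + 24 * C^2 * al * b * m^2 * r^4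
  + 7 * C^2 * al * b * p^2 * r^4 + C^2 * al * b * q^2 * r^4 + 8 * C^2 * al * b * r^4 * r1^2
  + 7 * C^2 * al * b^3 * r^6 + 2 * C^2 * al * d * p * q * r^4 + 16 * C^2 * al * m * p * r^3 * r1
  + 2 * C^2 * b * be * p * q * r^4 - 16 * C^2 * b * ga * m * p * r^4 - 8 * C^2 * b * k1 * r^4
  + 32 * C^2 * b * p * r^3 * r1 + 3 * C^2 * b^2 * be * d * r^6 - 8 * C^2 * b^2 * ga * r^5 * r1
  + 32 * C^2 * b^2 * m * r^4 + C^2 * be * d * p^2 * r^4 - C^2 * be * d * q^2 * r^4
  - C^2 * be * d^3 * r^6 - 16 * C^2 * d * q * r^3 * r1 + 8 * C^2 * g3 * p * r^4
  - 8 * C^2 * ga * m^2 * r^3 * r1 - 24 * C^2 * ga * p^2 * r^3 * r1 - 8 * C^2 * ga * r^3 * r1^3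
  + 8 * C^2 * k3 * r^3 * r1 + 8 * C^2 * m * r^2 * r1^2 - 8 * C^2 * m * r^3 * r2
  + 24 * C^3 * S * al * b^2 * d * r^6 + 8 * C^3 * S * al * d * r^4 * r1^2
  + 8 * C^3 * S * b * be * r^4 * r1^2 - 16 * C^3 * S * b * d * ga * r^5 * r1
  + 8 * C^3 * S * b^3 * be * r^6 - 16 * C^3 * a * d * r^4 * r1
  + 16 * C^3 * al * b * p * r^4 * r1 + 24 * C^3 * al * b^2 * m * r^5
  + 8 * C^3 * al * m * r^3 * r1^2 - 16 * C^3 * b * ga * m * r^4 * r1 + 24 * C^3 * b * r^3 * r1^2
  - 8 * C^3 * b * r^4 * r2 - 8 * C^3 * b^2 * ga * p * r^5 + 16 * C^3 * b^3 * r^5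
  + 8 * C^3 * g3 * r^4 * r1 - 24 * C^3 * ga * p * r^3 * r1^2 + 8 * C^4 * al * b * r^4 * r1^2
  + 8 * C^4 * al * b^3 * r^6 - 8 * C^4 * b^2 * ga * r^5 * r1 - 8 * C^4 * ga * r^3 * r1^3
  + 16 * S * a * b * r^4 * r1 + 12 * S * al * b * d * m * r^5 + 4 * S * al * b * q * r^4 * r1
  + 4 * S * al * d * p * r^4 * r1 + 4 * S * al * m * p * q * r^3 + 4 * S * b * be * p * r^4 * r1
  - 4 * S * b * d * ga * p * r^5 - 8 * S * b * p * q * r^3 + 6 * S * b^2 * be * m * r^5
  + 12 * S * b^2 * d * r^5 - 2 * S * b^2 * ga * q * r^5 + 12 * S * be * d * q * r^4 * r1
  + 18 * S * be * d^2 * m * r^5 + 2 * S * be * m * p^2 * r^3 + 6 * S * be * m * q^2 * r^3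
  + 8 * S * be * m * r^3 * r1^2 + 8 * S * be * m^3 * r^3 - 16 * S * d * ga * m * r^4 * r1
  + 24 * S * d * m^2 * r^3 + 12 * S * d * p^2 * r^3 + 4 * S * d * q^2 * r^3
  + 24 * S * d * r^3 * r1^2 - 8 * S * d * r^4 * r2 - 6 * S * d^2 * ga * q * r^5
  + 12 * S * d^3 * r^5 - 8 * S * ga * m^2 * q * r^3 - 6 * S * ga * p^2 * q * r^3
  - 24 * S * ga * q * r^3 * r1^2 - 6 * S * ga * q^3 * r^3 + 8 * S * h3 * r^4 * r1
  - 8 * S * k2 * m * r^3 + 8 * S * k3 * q * r^3 + 16 * S * m * q * r^2 * r1
  + 16 * S^2 * a * b * q * r^4 + 3 * S^2 * al * b * d^2 * r^6 - S^2 * al * b * p^2 * r^4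
  + S^2 * al * b * q^2 * r^4 - S^2 * al * b^3 * r^6 + 2 * S^2 * al * d * p * q * r^4
  + 2 * S^2 * b * be * p * q * r^4 - 16 * S^2 * b * p * r^3 * r1 + 3 * S^2 * b^2 * be * d * r^6
  + 24 * S^2 * be * d * m^2 * r^4 + S^2 * be * d * p^2 * r^4 + 7 * S^2 * be * d * q^2 * r^4
  + 8 * S^2 * be * d * r^4 * r1^2 + 7 * S^2 * be * d^3 * r^6 + 16 * S^2 * be * m * q * r^3 * r1
  - 16 * S^2 * d * ga * m * q * r^4 - 8 * S^2 * d * k2 * r^4 + 32 * S^2 * d * q * r^3 * r1
  - 8 * S^2 * d^2 * ga * r^5 * r1 + 32 * S^2 * d^2 * m * r^4 - 8 * S^2 * ga * m^2 * r^3 * r1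
  - 24 * S^2 * ga * q^2 * r^3 * r1 - 8 * S^2 * ga * r^3 * r1^3 + 8 * S^2 * h3 * q * r^4
  + 8 * S^2 * k3 * r^3 * r1 + 8 * S^2 * m * r^2 * r1^2 - 8 * S^2 * m * r^3 * r2
  + 16 * S^3 * a * b * r^4 * r1 + 16 * S^3 * be * d * q * r^4 * r1
  + 24 * S^3 * be * d^2 * m * r^5 + 8 * S^3 * be * m * r^3 * r1^2
  - 16 * S^3 * d * ga * m * r^4 * r1 + 24 * S^3 * d * r^3 * r1^2 - 8 * S^3 * d * r^4 * r2
  - 8 * S^3 * d^2 * ga * q * r^5 + 16 * S^3 * d^3 * r^5 - 24 * S^3 * ga * q * r^3 * r1^2
  + 8 * S^3 * h3 * r^4 * r1 + 8 * S^4 * be * d * r^4 * r1^2 + 8 * S^4 * be * d^3 * r^6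
  - 8 * S^4 * d^2 * ga * r^5 * r1 - 8 * S^4 * ga * r^3 * r1^3 + 8 * a * b * q * r^4
  - 8 * a * d * p * r^4 + 3 * al * b * d^2 * r^6 + 12 * al * b * m^2 * r^4
  + 3 * al * b * p^2 * r^4 + al * b * q^2 * r^4 + 4 * al * b * r^4 * r1^2 + 3 * al * b^3 * r^6
  + 2 * al * d * p * q * r^4 + 8 * al * m * p * r^3 * r1 + 2 * b * be * p * q * r^4
  - 8 * b * ga * m * p * r^4 - 4 * b * k1 * r^4 + 8 * b * p * r^3 * r1 + 3 * b^2 * be * d * r^6
  - 4 * b^2 * ga * r^5 * r1 + 16 * b^2 * m * r^4 + 12 * be * d * m^2 * r^4 + be * d * p^2 * r^4
  + 3 * be * d * q^2 * r^4 + 4 * be * d * r^4 * r1^2 + 3 * be * d^3 * r^6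
  + 8 * be * m * q * r^3 * r1 - 8 * d * ga * m * q * r^4 - 4 * d * k2 * r^4
  + 8 * d * q * r^3 * r1 - 4 * d^2 * ga * r^5 * r1 + 16 * d^2 * m * r^4 + 4 * g3 * p * r^4
  - 8 * ga * m^2 * r^3 * r1 - 12 * ga * p^2 * r^3 * r1 - 12 * ga * q^2 * r^3 * r1
  - 8 * ga * r^3 * r1^3 + 4 * h3 * q * r^4 + 8 * k3 * r^3 * r1 + 8 * m * p^2 * r^2
  + 8 * m * q^2 * r^2 + 8 * m * r^2 * r1^2 - 8 * m * r^3 * r2 + 8 * m^3 * r^2.

Lemma jet_phi_mc_numer_harmonics (J : jet) (C S : R) :
  8 * jet_phi_mc_numer J C S
  = trig4_poly (circle_harmonics J) C S + (C ^ 2 + S ^ 2 - 1) * circle_cofactor J C S.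
Proof.
  destruct J. unfold jet_phi_mc_numer, phi_mc_numer, jet_Xs, jet_Xt, jet_Xss, jet_Xst, jet_Xtt,
    vdot, vcross, trig4_poly, circle_harmonics, circle_cofactor; simpl.
  ring.
Qed.

(* X + i Y = (al + i be) (b + i d) and Qre + i Qim = (p + i q)^2 + r^2 (b + i d)^2. *)
Lemma circle_harmonic4 (J : jet) :
  let X := jal J * jb J - jbe J * jd J in let Y := jal J * jd J + jbe J * jb J in
  let Qre := jp J ^ 2 - jq J ^ 2 + jr J ^ 2 * (jb J ^ 2 - jd J ^ 2) in
  let Qim := 2 * jp J * jq J + 2 * jr J ^ 2 * jb J * jd J in
  ta4 (circle_harmonics J) = jr J ^ 4 * (X * Qre - Y * Qim) /\
  tb4 (circle_harmonics J) = jr J ^ 4 * (X * Qim + Y * Qre).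
Proof. destruct J; simpl; split; ring. Qed.

(* p + i q = sg i r (b + i d): the tangential velocity of the centre is - sg r n x n'. *)
Definition jet_spin (sg : R) (J : jet) : Prop :=
  jp J = - sg * jr J * jd J /\ jq J = sg * jr J * jb J.

Lemma circle_harmonic3 (J : jet) (sg : R) : (sg = 1 \/ sg = -1) -> jet_spin sg J ->
  let X := jal J * (jb J ^ 2 - jd J ^ 2) - 2 * jbe J * jb J * jd J in
  let Y := 2 * jal J * jb J * jd J + jbe J * (jb J ^ 2 - jd J ^ 2) in
  ta3 (circle_harmonics J) = 4 * jr J ^ 5 * (jm J * X - sg * jr1 J * Y) /\
  tb3 (circle_harmonics J) = 4 * jr J ^ 5 * (jm J * Y + sg * jr1 J * X).
Proof.
  destruct J as [p q m a b d g2 g3 h3 k1 k2 k3 r r1 r2 al be ga]; unfold jet_spin; simpl.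
  intros [-> | ->] [-> ->]; split; ring.
Qed.

Lemma circle_harmonic2 (J : jet) (sg : R) : (sg = 1 \/ sg = -1) -> jet_spin sg J ->
  jm J = 0 -> jk1 J = - sg * jr J * (2 * ja J * jb J + jh3 J) ->
  jk2 J = - sg * jr J * (2 * ja J * jd J - jg3 J) -> jk3 J = 0 -> jr1 J = 0 -> jr2 J = 0 ->
  ta2 (circle_harmonics J) = 4 * jr J ^ 6 * (jb J ^ 2 + jd J ^ 2) * (jal J * jb J - jbe J * jd J) /\
  tb2 (circle_harmonics J) = 4 * jr J ^ 6 * (jb J ^ 2 + jd J ^ 2) * (jal J * jd J + jbe J * jb J).
Proof.
  destruct J as [p q m a b d g2 g3 h3 k1 k2 k3 r r1 r2 al be ga]; unfold jet_spin; simpl.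
  intros [-> | ->] [-> ->] -> -> -> -> -> ->; split; ring.
Qed.

Lemma circle_harmonic4_eq0 (J : jet) :
  0 < jr J -> 0 < jb J ^ 2 + jd J ^ 2 -> 0 < jal J ^ 2 + jbe J ^ 2 ->
  ta4 (circle_harmonics J) = 0 -> tb4 (circle_harmonics J) = 0 ->
  exists sg, (sg = 1 \/ sg = -1) /\ jet_spin sg J.
Proof.
  intros Hr Hbd Hv A4 B4.
  destruct (circle_harmonic4 J) as [F4a F4b]; simpl in F4a, F4b.
  rewrite A4 in F4a. rewrite B4 in F4b.
  assert (Hr4 : jr J ^ 4 <> 0) by (apply pow_nonzero; lra).
  destruct (cmul_eq0 (jal J * jb J - jbe J * jd J) (jal J * jd J + jbe J * jb J)
    (jp J ^ 2 - jq J ^ 2 + jr J ^ 2 * (jb J ^ 2 - jd J ^ 2))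
    (2 * jp J * jq J + 2 * jr J ^ 2 * jb J * jd J)) as [Qre Qim].
  { replace (_ ^ 2 + _ ^ 2) with ((jal J ^ 2 + jbe J ^ 2) * (jb J ^ 2 + jd J ^ 2)) by ring.
    apply Rmult_lt_0_compat; assumption. }
  { destruct (Rmult_integral _ _ (eq_sym F4a)); [contradiction | assumption]. }
  { destruct (Rmult_integral _ _ (eq_sym F4b)); [contradiction | assumption]. }
  assert (Prod : ((jp J + jr J * jd J) ^ 2 + (jq J - jr J * jb J) ^ 2)
                 * ((jp J - jr J * jd J) ^ 2 + (jq J + jr J * jb J) ^ 2) = 0).
  { transitivity ((jp J ^ 2 - jq J ^ 2 + jr J ^ 2 * (jb J ^ 2 - jd J ^ 2)) ^ 2
                  + (2 * jp J * jq J + 2 * jr J ^ 2 * jb J * jd J) ^ 2);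
      [ring | rewrite Qre, Qim; ring]. }
  unfold jet_spin.
  destruct (Rmult_integral _ _ Prod) as [Z | Z]; apply sum_sqr_eq0 in Z.
  - exists 1. split; [left; reflexivity | split; lra].
  - exists (-1). split; [right; reflexivity | split; lra].
Qed.

Lemma circle_harmonic3_eq0 (J : jet) (sg : R) : (sg = 1 \/ sg = -1) -> jet_spin sg J ->
  0 < jr J -> 0 < jb J ^ 2 + jd J ^ 2 -> 0 < jal J ^ 2 + jbe J ^ 2 ->
  ta3 (circle_harmonics J) = 0 -> tb3 (circle_harmonics J) = 0 -> jm J = 0 /\ jr1 J = 0.
Proof.
  intros Hsg Hspin Hr Hbd Hv A3 B3.
  destruct (circle_harmonic3 J sg Hsg Hspin) as [F3a F3b]; simpl in F3a, F3b.
  rewrite A3 in F3a. rewrite B3 in F3b.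
  assert (Hr5 : 4 * jr J ^ 5 <> 0) by (assert (jr J ^ 5 <> 0) by (apply pow_nonzero; lra); lra).
  destruct (cmul_eq0 (jal J * (jb J ^ 2 - jd J ^ 2) - 2 * jbe J * jb J * jd J)
    (2 * jal J * jb J * jd J + jbe J * (jb J ^ 2 - jd J ^ 2)) (jm J) (sg * jr1 J)) as [Hm Hr1].
  { replace (_ ^ 2 + _ ^ 2) with ((jal J ^ 2 + jbe J ^ 2) * (jb J ^ 2 + jd J ^ 2) ^ 2) by ring.
    apply Rmult_lt_0_compat; [assumption | apply pow_lt; assumption]. }
  { destruct (Rmult_integral _ _ (eq_sym F3a)); [contradiction | lra]. }
  { destruct (Rmult_integral _ _ (eq_sym F3b)); [contradiction | lra]. }
  split; [exact Hm | destruct Hsg as [-> | ->]; lra].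
Qed.

Lemma circle_harmonic2_neq0 (J : jet) (sg : R) : (sg = 1 \/ sg = -1) -> jet_spin sg J ->
  jm J = 0 -> jk1 J = - sg * jr J * (2 * ja J * jb J + jh3 J) ->
  jk2 J = - sg * jr J * (2 * ja J * jd J - jg3 J) -> jk3 J = 0 -> jr1 J = 0 -> jr2 J = 0 ->
  0 < jr J -> 0 < jb J ^ 2 + jd J ^ 2 -> 0 < jal J ^ 2 + jbe J ^ 2 ->
  ta2 (circle_harmonics J) = 0 -> tb2 (circle_harmonics J) = 0 -> False.
Proof.
  intros Hsg Hspin Hm Hk1 Hk2 Hk3 Hr1 Hr2 Hr Hbd Hv A2 B2.
  destruct (circle_harmonic2 J sg Hsg Hspin Hm Hk1 Hk2 Hk3 Hr1 Hr2) as [F2a F2b].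
  rewrite A2 in F2a. rewrite B2 in F2b.
  assert (Hc : 4 * jr J ^ 6 * (jb J ^ 2 + jd J ^ 2) <> 0)
    by (assert (0 < jr J ^ 6) by (apply pow_lt; lra); nra).
  destruct (cmul_eq0 (jb J) (jd J) (jal J) (jbe J) Hbd) as [Ha Hb].
  { destruct (Rmult_integral _ _ (eq_sym F2a)); [contradiction | lra]. }
  { destruct (Rmult_integral _ _ (eq_sym F2b)); [contradiction | lra]. }
  rewrite Ha, Hb in Hv. lra.
Qed.

(** * The cyclic surface *)

Section MovingFrame.
Variables (s0 s1 : R) (e1 e2 e11 e12 e21 e22 : R -> vec3).
Hypothesis He1 : forall s, s0 < s < s1 -> has_deriv3 e1 s (e11 s) /\ has_deriv3 e11 s (e12 s).
Hypothesis He2 : forall s, s0 < s < s1 -> has_deriv3 e2 s (e21 s) /\ has_deriv3 e21 s (e22 s).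
Hypothesis Horth : forall s, s0 < s < s1 ->
  vdot (e1 s) (e1 s) = 1 /\ vdot (e2 s) (e2 s) = 1 /\ vdot (e1 s) (e2 s) = 0.

Definition normal (s : R) : vec3 := vcross (e1 s) (e2 s).
Definition normal1 (s : R) : vec3 := vadd (vcross (e11 s) (e2 s)) (vcross (e1 s) (e21 s)).
Definition normal2 (s : R) : vec3 :=
  vadd (vadd (vcross (e12 s) (e2 s)) (vcross (e11 s) (e21 s)))
    (vadd (vcross (e11 s) (e21 s)) (vcross (e1 s) (e22 s))).

Definition rot (s : R) : R := vdot (e11 s) (e2 s).
Definition tilt1 (s : R) : R := vdot (e11 s) (normal s).
Definition tilt2 (s : R) : R := vdot (e21 s) (normal s).

Local Notation fr s := (frame (e1 s) (e2 s)).

Lemma frame_coords_at (s : R) (w : vec3) : s0 < s < s1 ->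
  w = fr s (V3 (vdot w (e1 s)) (vdot w (e2 s)) (vdot w (normal s))).
Proof. intros Hs. destruct (Horth s Hs) as (H11 & H22 & H12). apply frame_coords; auto. Qed.

Lemma vdot_frame_at (s : R) (x y : vec3) : s0 < s < s1 -> vdot (fr s x) (fr s y) = vdot x y.
Proof. intros Hs. destruct (Horth s Hs) as (H11 & H22 & H12). apply vdot_frame; auto. Qed.

Lemma vcross_frame_at (s : R) (x y : vec3) : s0 < s < s1 ->
  vcross (fr s x) (fr s y) = fr s (vcross x y).
Proof. intros Hs. destruct (Horth s Hs) as (H11 & H22 & H12). apply vcross_frame; auto. Qed.

Lemma vdot_frame_basis (s : R) (x : vec3) : s0 < s < s1 ->
  vdot (fr s x) (e1 s) = vx x /\ vdot (fr s x) (e2 s) = vy x /\ vdot (fr s x) (normal s) = vz x.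
Proof.
  intros Hs.
  assert (Coord : forall u, vdot (fr s x) (fr s u) = vdot x u)
    by (intros; apply vdot_frame_at; auto).
  pose proof (Coord (V3 1 0 0)) as C1. pose proof (Coord (V3 0 1 0)) as C2.
  pose proof (Coord (V3 0 0 1)) as C3.
  rewrite frame_basis1 in C1. rewrite frame_basis2 in C2. rewrite frame_basis3 in C3.
  unfold normal. rewrite C1, C2, C3. unfold vdot; simpl; repeat split; ring.
Qed.

Lemma vdot_e11_e1 (s : R) : s0 < s < s1 -> vdot (e11 s) (e1 s) = 0.
Proof.
  intros Hs. destruct (He1 s Hs) as [D _].
  pose proof (vdot_const_deriv e1 e1 s0 s1 s 1 _ _ Hs (fun y Hy => proj1 (Horth y Hy)) D D) as E.
  rewrite (vdot_comm (e1 s)) in E. lra.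
Qed.

Lemma vdot_e21_e2 (s : R) : s0 < s < s1 -> vdot (e21 s) (e2 s) = 0.
Proof.
  intros Hs. destruct (He2 s Hs) as [D _].
  pose proof (vdot_const_deriv e2 e2 s0 s1 s 1 _ _ Hs
    (fun y Hy => proj1 (proj2 (Horth y Hy))) D D) as E.
  rewrite (vdot_comm (e2 s)) in E. lra.
Qed.

Lemma e11_frame (s : R) : s0 < s < s1 -> e11 s = fr s (V3 0 (rot s) (tilt1 s)).
Proof.
  intros Hs. rewrite (frame_coords_at s (e11 s)) at 1 by auto.
  rewrite vdot_e11_e1 by auto. reflexivity.
Qed.

Lemma e21_frame (s : R) : s0 < s < s1 -> e21 s = fr s (V3 (- rot s) 0 (tilt2 s)).
Proof.
  intros Hs. destruct (He1 s Hs) as [D1 _]. destruct (He2 s Hs) as [D2 _].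
  assert (E1 : vdot (e21 s) (e1 s) = - rot s).
  { pose proof (vdot_const_deriv e1 e2 s0 s1 s 0 _ _ Hs
      (fun y Hy => proj2 (proj2 (Horth y Hy))) D1 D2) as E.
    unfold rot. rewrite (vdot_comm (e1 s)) in E. lra. }
  rewrite (frame_coords_at s (e21 s)) at 1 by auto. rewrite E1, vdot_e21_e2 by auto. reflexivity.
Qed.

Lemma e12_frame (s : R) : s0 < s < s1 ->
  e12 s = fr s (V3 (- (rot s ^ 2 + tilt1 s ^ 2)) (vdot (e12 s) (e2 s)) (vdot (e12 s) (normal s))).
Proof.
  intros Hs. destruct (He1 s Hs) as [D1 D2].
  assert (E : vdot (e12 s) (e1 s) = - (rot s ^ 2 + tilt1 s ^ 2)).
  { assert (Z : forall y, s0 < y < s1 -> vdot (e1 y) (e11 y) = 0)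
      by (intros y Hy; rewrite vdot_comm; apply vdot_e11_e1; auto).
    pose proof (vdot_const_deriv e1 e11 s0 s1 s 0 _ _ Hs Z D1 D2) as E.
    rewrite (e11_frame s Hs), vdot_frame_at in E by auto.
    unfold vdot at 1 in E; simpl in E. rewrite vdot_comm. lra. }
  rewrite (frame_coords_at s (e12 s)) at 1 by auto. rewrite E. reflexivity.
Qed.

Lemma e22_frame (s : R) : s0 < s < s1 ->
  e22 s = fr s (V3 (- 2 * tilt1 s * tilt2 s - vdot (e12 s) (e2 s)) (- (rot s ^ 2 + tilt2 s ^ 2))
                   (vdot (e22 s) (normal s))).
Proof.
  intros Hs. destruct (He1 s Hs) as [A1 A2]. destruct (He2 s Hs) as [B1 B2].
  assert (E2 : vdot (e22 s) (e2 s) = - (rot s ^ 2 + tilt2 s ^ 2)).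
  { assert (Z : forall y, s0 < y < s1 -> vdot (e2 y) (e21 y) = 0)
      by (intros y Hy; rewrite vdot_comm; apply vdot_e21_e2; auto).
    pose proof (vdot_const_deriv e2 e21 s0 s1 s 0 _ _ Hs Z B1 B2) as E.
    rewrite (e21_frame s Hs), vdot_frame_at in E by auto.
    unfold vdot at 1 in E; simpl in E. rewrite vdot_comm. lra. }
  assert (E1 : vdot (e22 s) (e1 s) = - 2 * tilt1 s * tilt2 s - vdot (e12 s) (e2 s)).
  { assert (Z : forall y, s0 < y < s1 -> vdot (e11 y) (e2 y) + vdot (e1 y) (e21 y) = 0).
    { intros y Hy. destruct (He1 y Hy) as [D1 _]. destruct (He2 y Hy) as [D2 _].
      exact (vdot_const_deriv e1 e2 s0 s1 y 0 _ _ Hy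
        (fun z Hz => proj2 (proj2 (Horth z Hz))) D1 D2). }
    pose proof (derivable_pt_lim_plus _ _ _ _ _ (derivable_pt_lim_vdot _ _ _ _ _ A2 B1)
      (derivable_pt_lim_vdot _ _ _ _ _ A1 B2)) as D.
    pose proof (derivable_pt_lim_loc_const _ s0 s1 s 0 _ Hs Z D) as E.
    rewrite (e11_frame s Hs), (e21_frame s Hs), vdot_frame_at in E by auto.
    unfold vdot at 2 3 in E; simpl in E. rewrite vdot_comm. lra. }
  rewrite (frame_coords_at s (e22 s)) at 1 by auto. rewrite E1, E2. reflexivity.
Qed.

Lemma has_deriv3_normal (s : R) : s0 < s < s1 -> has_deriv3 normal s (normal1 s).
Proof.
  intros Hs. destruct (He1 s Hs) as [A _]. destruct (He2 s Hs) as [B _].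
  exact (has_deriv3_cross _ _ _ _ _ A B).
Qed.

Lemma has_deriv3_normal1 (s : R) : s0 < s < s1 -> has_deriv3 normal1 s (normal2 s).
Proof.
  intros Hs. destruct (He1 s Hs) as [A1 A2]. destruct (He2 s Hs) as [B1 B2].
  exact (has_deriv3_add _ _ _ _ _ (has_deriv3_cross _ _ _ _ _ A2 B1)
    (has_deriv3_cross _ _ _ _ _ A1 B2)).
Qed.

Lemma vcross_frame_e2 (s : R) (u : vec3) : s0 < s < s1 ->
  vcross (fr s u) (e2 s) = fr s (vcross u (V3 0 1 0)).
Proof. intros Hs. rewrite <- vcross_frame_at, frame_basis2 by auto. reflexivity. Qed.

Lemma vcross_e1_frame (s : R) (u : vec3) : s0 < s < s1 ->
  vcross (e1 s) (fr s u) = fr s (vcross (V3 1 0 0) u).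
Proof. intros Hs. rewrite <- vcross_frame_at, frame_basis1 by auto. reflexivity. Qed.

Lemma vcross_normal_frame (s : R) (u : vec3) : s0 < s < s1 ->
  vcross (normal s) (fr s u) = fr s (vcross (V3 0 0 1) u).
Proof. intros Hs. rewrite <- vcross_frame_at, frame_basis3 by auto. reflexivity. Qed.

Lemma normal1_frame (s : R) : s0 < s < s1 -> normal1 s = fr s (V3 (- tilt1 s) (- tilt2 s) 0).
Proof.
  intros Hs. unfold normal1.
  rewrite (e11_frame s Hs), (e21_frame s Hs), vcross_frame_e2, vcross_e1_frame, frame_add by auto.
  f_equal. vec3_ring.
Qed.

Lemma normal2_frame (s : R) : s0 < s < s1 ->
  normal2 s = fr s (V3 (2 * rot s * tilt2 s - vdot (e12 s) (normal s))
                       (- 2 * rot s * tilt1 s - vdot (e22 s) (normal s))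
                       (- (tilt1 s ^ 2 + tilt2 s ^ 2))).
Proof.
  intros Hs. unfold normal2.
  rewrite (e12_frame s Hs) at 1. rewrite (e22_frame s Hs) at 1.
  rewrite (e11_frame s Hs), (e21_frame s Hs).
  rewrite vcross_frame_e2, vcross_e1_frame, vcross_frame_at, !frame_add by auto.
  f_equal. vec3_ring.
Qed.

Section CyclicSurface.
Variables (v : vec3) (t0 t1 : R) (c c1 c2 : R -> vec3) (r r1 r2 : R -> R)
  (Xs Xt Xss Xst Xtt : R -> R -> vec3).
Hypothesis Hv : v <> vzero.
Hypothesis Ht : t0 < t1.
Hypothesis Hc : forall s, s0 < s < s1 -> has_deriv3 c s (c1 s) /\ has_deriv3 c1 s (c2 s).
Hypothesis Hr : forall s, s0 < s < s1 ->
  derivable_pt_lim r s (r1 s) /\ derivable_pt_lim r1 s (r2 s).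
Hypothesis Hr_pos : forall s, s0 < s < s1 -> 0 < r s.
Hypothesis HX : forall s t, s0 < s < s1 -> t0 < t < t1 ->
  has_deriv3 (fun u => cyclic_param c e1 e2 r u t) s (Xs s t) /\
  has_deriv3 (fun u => cyclic_param c e1 e2 r s u) t (Xt s t) /\
  has_deriv3 (fun u => Xs u t) s (Xss s t) /\
  has_deriv3 (fun u => Xs s u) t (Xst s t) /\
  has_deriv3 (fun u => Xt s u) t (Xtt s t) /\
  vcross (Xs s t) (Xt s t) <> vzero /\
  mean_curv (Xs s t) (Xt s t) (Xss s t) (Xst s t) (Xtt s t)
    = / 2 * vdot (unit_normal (Xs s t) (Xt s t)) v.

Definition radial (t s : R) : vec3 := vadd (vscal (cos t) (e1 s)) (vscal (sin t) (e2 s)).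
Definition radial1 (t s : R) : vec3 := vadd (vscal (cos t) (e11 s)) (vscal (sin t) (e21 s)).
Definition radial2 (t s : R) : vec3 := vadd (vscal (cos t) (e12 s)) (vscal (sin t) (e22 s)).
Definition tangent (t s : R) : vec3 := vadd (vscal (- sin t) (e1 s)) (vscal (cos t) (e2 s)).
Definition tangent1 (t s : R) : vec3 := vadd (vscal (- sin t) (e11 s)) (vscal (cos t) (e21 s)).

Definition X_s (s t : R) : vec3 :=
  vadd (c1 s) (vadd (vscal (r1 s) (radial t s)) (vscal (r s) (radial1 t s))).
Definition X_t (s t : R) : vec3 := vscal (r s) (tangent t s).
Definition X_ss (s t : R) : vec3 :=
  vadd (c2 s) (vadd (vscal (r2 s) (radial t s))
    (vadd (vscal (2 * r1 s) (radial1 t s)) (vscal (r s) (radial2 t s)))).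
Definition X_st (s t : R) : vec3 := vadd (vscal (r1 s) (tangent t s)) (vscal (r s) (tangent1 t s)).
Definition X_tt (s t : R) : vec3 := vscal (- r s) (radial t s).

Lemma has_deriv3_radial (t s : R) : s0 < s < s1 -> has_deriv3 (radial t) s (radial1 t s).
Proof.
  intros Hs. destruct (He1 s Hs) as [A _]. destruct (He2 s Hs) as [B _].
  eapply has_deriv3_ext; [apply has_deriv3_add; apply has_deriv3_scal;
    [apply derivable_pt_lim_const | exact A | apply derivable_pt_lim_const | exact B] |].
  unfold radial1; vec3_ring.
Qed.

Lemma has_deriv3_radial1 (t s : R) : s0 < s < s1 -> has_deriv3 (radial1 t) s (radial2 t s).
Proof.
  intros Hs. destruct (He1 s Hs) as [_ A]. destruct (He2 s Hs) as [_ B].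
  eapply has_deriv3_ext; [apply has_deriv3_add; apply has_deriv3_scal;
    [apply derivable_pt_lim_const | exact A | apply derivable_pt_lim_const | exact B] |].
  unfold radial2; vec3_ring.
Qed.

Lemma has_deriv3_angle_radial (s t : R) : has_deriv3 (fun u => radial u s) t (tangent t s).
Proof.
  eapply has_deriv3_ext; [apply has_deriv3_add; apply has_deriv3_scal;
    [apply derivable_pt_lim_cos | apply has_deriv3_const
    | apply derivable_pt_lim_sin | apply has_deriv3_const] |].
  unfold tangent; vec3_ring.
Qed.

Lemma has_deriv3_angle_radial1 (s t : R) : has_deriv3 (fun u => radial1 u s) t (tangent1 t s).
Proof.
  eapply has_deriv3_ext; [apply has_deriv3_add; apply has_deriv3_scal;
    [apply derivable_pt_lim_cos | apply has_deriv3_const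
    | apply derivable_pt_lim_sin | apply has_deriv3_const] |].
  unfold tangent1; vec3_ring.
Qed.

Lemma has_deriv3_angle_tangent (s t : R) :
  has_deriv3 (fun u => tangent u s) t (vscal (-1) (radial t s)).
Proof.
  eapply has_deriv3_ext; [apply has_deriv3_add; apply has_deriv3_scal;
    [apply derivable_pt_lim_opp, derivable_pt_lim_sin | apply has_deriv3_const
    | apply derivable_pt_lim_cos | apply has_deriv3_const] |].
  unfold radial; vec3_ring.
Qed.

Lemma has_deriv3_X_s_param (s t : R) : s0 < s < s1 ->
  has_deriv3 (fun u => cyclic_param c e1 e2 r u t) s (X_s s t).
Proof.
  intros Hs. destruct (Hc s Hs) as [A _]. destruct (Hr s Hs) as [B _].
  eapply has_deriv3_ext;
    [apply has_deriv3_add;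
      [exact A | apply has_deriv3_scal; [exact B | apply has_deriv3_radial; auto]] |].
  unfold X_s; vec3_ring.
Qed.

Lemma has_deriv3_X_t_param (s t : R) :
  has_deriv3 (fun u => cyclic_param c e1 e2 r s u) t (X_t s t).
Proof.
  eapply has_deriv3_ext; [apply has_deriv3_add;
    [apply has_deriv3_const | apply has_deriv3_scal;
      [apply derivable_pt_lim_const | apply has_deriv3_angle_radial]] |].
  unfold X_t; vec3_ring.
Qed.

Lemma has_deriv3_X_ss (s t : R) : s0 < s < s1 -> has_deriv3 (fun u => X_s u t) s (X_ss s t).
Proof.
  intros Hs. destruct (Hc s Hs) as [_ A]. destruct (Hr s Hs) as [B1 B2].
  eapply has_deriv3_ext; [apply has_deriv3_add; [exact A | apply has_deriv3_add;
    apply has_deriv3_scal; [exact B2 | apply has_deriv3_radial; auto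
                           | exact B1 | apply has_deriv3_radial1; auto]] |].
  unfold X_ss; vec3_ring.
Qed.

Lemma has_deriv3_X_st (s t : R) : has_deriv3 (fun u => X_s s u) t (X_st s t).
Proof.
  eapply has_deriv3_ext; [apply has_deriv3_add; [apply has_deriv3_const | apply has_deriv3_add;
    apply has_deriv3_scal; [apply derivable_pt_lim_const | apply has_deriv3_angle_radial
                           | apply derivable_pt_lim_const | apply has_deriv3_angle_radial1]] |].
  unfold X_st; vec3_ring.
Qed.

Lemma has_deriv3_X_tt (s t : R) : has_deriv3 (fun u => X_t s u) t (X_tt s t).
Proof.
  eapply has_deriv3_ext;
    [apply has_deriv3_scal; [apply derivable_pt_lim_const | apply has_deriv3_angle_tangent] |].
  unfold X_tt; vec3_ring.
Qed.

Lemma partials_eq (s t : R) : s0 < s < s1 -> t0 < t < t1 ->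
  Xs s t = X_s s t /\ Xt s t = X_t s t /\ Xss s t = X_ss s t /\ Xst s t = X_st s t /\
  Xtt s t = X_tt s t.
Proof.
  intros Hs Htt. destruct (HX s t Hs Htt) as (D1 & D2 & D3 & D4 & D5 & _).
  assert (Es : forall u, s0 < u < s1 -> Xs u t = X_s u t).
  { intros u Hu. destruct (HX u t Hu Htt) as [D _].
    exact (has_deriv3_unique _ _ _ _ D (has_deriv3_X_s_param u t Hu)). }
  assert (Et : forall u, t0 < u < t1 -> Xt s u = X_t s u).
  { intros u Hu. destruct (HX s u Hs Hu) as [_ [D _]].
    exact (has_deriv3_unique _ _ _ _ D (has_deriv3_X_t_param s u)). }
  assert (Es' : forall u, t0 < u < t1 -> Xs s u = X_s s u).
  { intros u Hu. destruct (HX s u Hs Hu) as [D _].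
    exact (has_deriv3_unique _ _ _ _ D (has_deriv3_X_s_param s u Hs)). }
  split; [apply Es; auto | split; [apply Et; auto | split; [| split]]];
    eapply has_deriv3_unique; eauto.
  - apply (has_deriv3_loc _ _ s0 s1 s _ Hs Es), has_deriv3_X_ss; auto.
  - apply (has_deriv3_loc _ _ t0 t1 t _ Htt Es'), has_deriv3_X_st.
  - apply (has_deriv3_loc _ _ t0 t1 t _ Htt Et), has_deriv3_X_tt.
Qed.

Lemma phi_mc_numer_X_eq0 (s t : R) : s0 < s < s1 -> t0 < t < t1 ->
  phi_mc_numer (X_s s t) (X_t s t) (X_ss s t) (X_st s t) (X_tt s t) v = 0.
Proof.
  intros Hs Htt. destruct (HX s t Hs Htt) as (_ & _ & _ & _ & _ & Hn & Hmc).
  destruct (partials_eq s t Hs Htt) as (-> & -> & -> & -> & ->) in Hn, Hmc.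
  apply phi_mc_numer_eq0; auto.
Qed.

Definition jet_at (s : R) : jet :=
  Jet (vdot (c1 s) (e1 s)) (vdot (c1 s) (e2 s)) (vdot (c1 s) (normal s))
    (rot s) (tilt1 s) (tilt2 s)
    (vdot (e12 s) (e2 s)) (vdot (e12 s) (normal s)) (vdot (e22 s) (normal s))
    (vdot (c2 s) (e1 s)) (vdot (c2 s) (e2 s)) (vdot (c2 s) (normal s))
    (r s) (r1 s) (r2 s) (vdot v (e1 s)) (vdot v (e2 s)) (vdot v (normal s)).

(* [at 1]: the right-hand sides of [e12_frame] and [e22_frame] mention [e12 s], [e22 s]. *)
Ltac frame_expand s Hs :=
  unfold radial, radial1, radial2, tangent, tangent1;
  rewrite ?(e11_frame s Hs), ?(e21_frame s Hs);
  try rewrite (e12_frame s Hs) at 1; try rewrite (e22_frame s Hs) at 1;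
  rewrite ?(frame_scal_e1 (e1 s) (e2 s)), ?(frame_scal_e2 (e1 s) (e2 s));
  repeat (rewrite frame_scal || rewrite frame_add).

Lemma X_frame (s t : R) : s0 < s < s1 ->
  let J := jet_at s in let C := cos t in let S := sin t in
  X_s s t = fr s (jet_Xs J C S) /\ X_t s t = fr s (jet_Xt J C S) /\
  X_ss s t = fr s (jet_Xss J C S) /\ X_st s t = fr s (jet_Xst J C S) /\
  X_tt s t = fr s (jet_Xtt J C S) /\ v = fr s (V3 (jal J) (jbe J) (jga J)).
Proof.
  intros Hs J C S. subst J C S. repeat split.
  - unfold X_s. rewrite (frame_coords_at s (c1 s)) at 1 by auto. frame_expand s Hs.
    f_equal. unfold jet_Xs; simpl. vec3_ring.
  - unfold X_t. frame_expand s Hs. f_equal. unfold jet_Xt; simpl. vec3_ring.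
  - unfold X_ss. rewrite (frame_coords_at s (c2 s)) at 1 by auto. frame_expand s Hs.
    f_equal. unfold jet_Xss; simpl. vec3_ring.
  - unfold X_st. frame_expand s Hs. f_equal. unfold jet_Xst; simpl. vec3_ring.
  - unfold X_tt. frame_expand s Hs. f_equal. unfold jet_Xtt; simpl. vec3_ring.
  - apply frame_coords_at; auto.
Qed.

Lemma circle_harmonics_eq0 (s : R) : s0 < s < s1 ->
  let T := circle_harmonics (jet_at s) in
  ta2 T = 0 /\ tb2 T = 0 /\ ta3 T = 0 /\ tb3 T = 0 /\ ta4 T = 0 /\ tb4 T = 0.
Proof.
  intros Hs T.
  assert (Hzero : forall t, t0 < t < t1 -> trig4_eval T t = 0).
  { intros t Htt. rewrite trig4_eval_poly.
    pose proof (jet_phi_mc_numer_harmonics (jet_at s) (cos t) (sin t)) as E.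
    replace (cos t ^ 2 + sin t ^ 2 - 1) with 0 in E
      by (pose proof (sin2_cos2 t) as SC; unfold Rsqr in SC; nra).
    destruct (X_frame s t Hs) as (Es & Et & Ess & Est & Ett & Ev).
    pose proof (phi_mc_numer_X_eq0 s t Hs Htt) as Z.
    destruct (Horth s Hs) as (H11 & H22 & H12).
    rewrite Es, Et, Ess, Est, Ett, Ev, phi_mc_numer_frame in Z by auto.
    unfold jet_phi_mc_numer in E. rewrite Z, Rmult_0_l, Rmult_0_r, Rplus_0_r in E.
    symmetry. exact E. }
  destruct (trig4_eq0 T t0 t1 Ht Hzero) as (_ & _ & _ & ?A2 & ?B2 & ?A3 & ?B3 & ?A4 & ?B4).
  repeat split; assumption.
Qed.

Lemma tilts_eq0_of_density_normal (x a b : R) : s0 < x < s1 -> a < x < b ->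
  (forall y, a < y < b -> vdot v (e1 y) = 0 /\ vdot v (e2 y) = 0) ->
  tilt1 x = 0 /\ tilt2 x = 0.
Proof.
  intros Hx Hab Hperp.
  destruct (He1 x Hx) as [D1 _]. destruct (He2 x Hx) as [D2 _].
  pose proof (vdot_const_deriv _ _ a b x 0 _ _ Hab (fun y Hy => proj1 (Hperp y Hy))
    (has_deriv3_const v x) D1) as E1.
  pose proof (vdot_const_deriv _ _ a b x 0 _ _ Hab (fun y Hy => proj2 (Hperp y Hy))
    (has_deriv3_const v x) D2) as E2.
  destruct (Hperp x Hab) as [P1 P2].
  assert (Hvn : v = fr x (V3 0 0 (vdot v (normal x)))).
  { rewrite (frame_coords_at x v) at 1 by auto. rewrite P1, P2. reflexivity. }
  rewrite Hvn, (e11_frame x Hx), vdot_frame_at in E1 by auto.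
  rewrite Hvn, (e21_frame x Hx), vdot_frame_at in E2 by auto.
  assert (Hg : vdot v (normal x) <> 0).
  { intros Hg. apply Hv. rewrite Hvn, Hg. apply frame_zero. }
  set (g := vdot v (normal x)) in *.
  unfold vdot, vzero in E1, E2; simpl in E1, E2.
  split; apply (Rmult_eq_reg_l g); lra.
Qed.

Lemma circle_spin_at (s : R) : s0 < s < s1 ->
  0 < tilt1 s ^ 2 + tilt2 s ^ 2 -> 0 < vdot v (e1 s) ^ 2 + vdot v (e2 s) ^ 2 ->
  vdot (c1 s) (normal s) = 0 /\ r1 s = 0 /\
  exists sg, (sg = 1 \/ sg = -1) /\ jet_spin sg (jet_at s).
Proof.
  intros Hs Htilt Hdens.
  destruct (circle_harmonics_eq0 s Hs) as (_ & _ & A3 & B3 & A4 & B4).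
  destruct (circle_harmonic4_eq0 (jet_at s) (Hr_pos s Hs) Htilt Hdens A4 B4) as (sg & Hsg & Hspin).
  destruct (circle_harmonic3_eq0 (jet_at s) sg Hsg Hspin (Hr_pos s Hs) Htilt Hdens A3 B3)
    as [Hm Hr1].
  split; [exact Hm | split; [exact Hr1 | exists sg; split; assumption]].
Qed.

(* Along an interval where the circles spin, c' = - sg r (n x n') and r' = 0; one more
   derivative determines c'' and makes the second harmonic nonzero. *)
Lemma spinning_circles_False (sg x a b : R) :
  (sg = 1 \/ sg = -1) -> s0 < x < s1 -> a < x < b ->
  (forall y, a < y < b ->
     s0 < y < s1 /\ vdot (c1 y) (normal y) = 0 /\ r1 y = 0 /\ jet_spin sg (jet_at y)) ->
  0 < tilt1 x ^ 2 + tilt2 x ^ 2 -> 0 < vdot v (e1 x) ^ 2 + vdot v (e2 x) ^ 2 -> False.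
Proof.
  intros Hsg Hx Hab Hspin Htilt Hdens.
  assert (Hc1 : forall y, a < y < b -> c1 y = vscal (- sg * r y) (vcross (normal y) (normal1 y))).
  { intros y Hy. destruct (Hspin y Hy) as (Hy' & Hm & _ & Hp & Hq). simpl in Hp, Hq.
    rewrite (frame_coords_at y (c1 y)) at 1 by auto.
    rewrite (normal1_frame y Hy'), vcross_normal_frame, frame_scal by auto.
    f_equal. rewrite Hm, Hp, Hq. vec3_ring. }
  destruct (Hspin x Hab) as (_ & Hm & Hr1 & Hspin_x).
  assert (Hr2 : r2 x = 0).
  { destruct (Hr x Hx) as [_ D].
    exact (derivable_pt_lim_loc_const _ a b x 0 _ Hab
      (fun y Hy => proj1 (proj2 (proj2 (Hspin y Hy)))) D). }
  assert (Hc2 : c2 x = fr x (V3 (- sg * r x * (2 * rot x * tilt1 x + vdot (e22 x) (normal x)))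
                              (- sg * r x * (2 * rot x * tilt2 x - vdot (e12 x) (normal x))) 0)).
  { destruct (Hr x Hx) as [Dr _]. destruct (Hc x Hx) as [_ Dc].
    assert (Dsr : derivable_pt_lim (fun y => - sg * r y) x (- sg * r1 x)).
    { eapply derivable_pt_lim_value;
        [apply derivable_pt_lim_mult; [apply derivable_pt_lim_const | exact Dr] | cbv beta; ring]. }
    pose proof (has_deriv3_scal _ _ _ _ _ Dsr
      (has_deriv3_cross _ _ _ _ _ (has_deriv3_normal x Hx) (has_deriv3_normal1 x Hx))) as D.
    rewrite (has_deriv3_unique _ _ _ _ Dc (has_deriv3_loc c1 _ a b x _ Hab Hc1 D)).
    rewrite (normal1_frame x Hx), (normal2_frame x Hx), vcross_frame_at, !vcross_normal_frame
      by auto.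
    repeat (rewrite frame_scal || rewrite frame_add). f_equal. rewrite Hr1. vec3_ring. }
  set (k := V3 _ _ _) in Hc2.
  destruct (vdot_frame_basis x k Hx) as (K1 & K2 & K3). rewrite <- Hc2 in K1, K2, K3.
  destruct (circle_harmonics_eq0 x Hx) as (A2 & B2 & _).
  exact (circle_harmonic2_neq0 (jet_at x) sg Hsg Hspin_x Hm K1 K2 K3 Hr1 Hr2 (Hr_pos x Hx)
    Htilt Hdens A2 B2).
Qed.

Definition spin_defect (sg s : R) : R :=
  (vdot (c1 s) (e1 s) + sg * r s * tilt2 s) ^ 2 + (vdot (c1 s) (e2 s) - sg * r s * tilt1 s) ^ 2.

Lemma spin_defect_of_spin (sg sg' s : R) : jet_spin sg (jet_at s) ->
  spin_defect sg' s = (sg - sg') ^ 2 * r s ^ 2 * (tilt1 s ^ 2 + tilt2 s ^ 2).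
Proof. intros [Hp Hq]. simpl in Hp, Hq. unfold spin_defect. rewrite Hp, Hq. ring. Qed.

Lemma derivable_pt_tilts (s : R) : s0 < s < s1 ->
  derivable_pt tilt1 s * derivable_pt tilt2 s.
Proof.
  intros Hs. destruct (He1 s Hs) as [_ D1]. destruct (He2 s Hs) as [_ D2].
  exact (derivable_pt_vdot _ _ _ _ _ D1 (has_deriv3_normal s Hs),
         derivable_pt_vdot _ _ _ _ _ D2 (has_deriv3_normal s Hs)).
Qed.

Lemma derivable_pt_spin_defect (sg s : R) : s0 < s < s1 -> derivable_pt (spin_defect sg) s.
Proof.
  intros Hs. destruct (derivable_pt_tilts s Hs) as [T1 T2].
  destruct (Hc s Hs) as [_ Dc]. destruct (He1 s Hs) as [D1 _]. destruct (He2 s Hs) as [D2 _].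
  assert (Dr : derivable_pt (fun y => sg * r y) s)
    by exact (derivable_pt_mult _ _ _ (derivable_pt_const sg s) (exist _ _ (proj1 (Hr s Hs)))).
  exact (derivable_pt_sum_sqr _ _ s
    (derivable_pt_plus _ _ _ (derivable_pt_vdot _ _ _ _ _ Dc D1) (derivable_pt_mult _ _ _ Dr T2))
    (derivable_pt_minus _ _ _ (derivable_pt_vdot _ _ _ _ _ Dc D2) (derivable_pt_mult _ _ _ Dr T1))).
Qed.

(* The sign sg is locally constant, since the defect of the opposite sign stays positive. *)
Lemma tilted_interval_False (a b : R) : s0 <= a < b -> b <= s1 ->
  (forall y, a < y < b ->
     0 < tilt1 y ^ 2 + tilt2 y ^ 2 /\ 0 < vdot v (e1 y) ^ 2 + vdot v (e2 y) ^ 2) -> False.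
Proof.
  intros Ha Hb Hpos. set (x := (a + b) / 2).
  assert (Hx : a < x < b) by (unfold x; lra).
  assert (Spin : forall y, a < y < b -> s0 < y < s1 /\ vdot (c1 y) (normal y) = 0 /\
                   r1 y = 0 /\ exists sg, (sg = 1 \/ sg = -1) /\ jet_spin sg (jet_at y)).
  { intros y Hy. assert (Hys : s0 < y < s1) by lra. destruct (Hpos y Hy).
    split; [exact Hys | apply circle_spin_at; auto]. }
  destruct (Spin x Hx) as (Hxs & _ & _ & sg & Hsg & Hsp).
  destruct (Hpos x Hx) as [Htilt Hdens].
  assert (Hdef : 0 < spin_defect (- sg) x).
  { rewrite (spin_defect_of_spin sg) by exact Hsp. pose proof (Hr_pos x Hxs).
    replace ((sg - - sg) ^ 2) with 4 by (destruct Hsg as [-> | ->]; ring).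
    apply Rmult_lt_0_compat; [nra | exact Htilt]. }
  destruct (derivable_pt_pos_locally _ a b x Hx (derivable_pt_spin_defect (- sg) x Hxs) Hdef)
    as (a' & b' & Ha' & Hb' & Hdef').
  apply (spinning_circles_False sg x a' b' Hsg Hxs ltac:(lra)); [| exact Htilt | exact Hdens].
  intros y Hy. destruct (Spin y ltac:(lra)) as (Hys & Hm & Hr1 & sg' & Hsg' & Hsp').
  split; [exact Hys | split; [exact Hm | split; [exact Hr1 |]]].
  replace sg with sg'; [exact Hsp' |].
  pose proof (Hdef' y Hy) as Hd. rewrite (spin_defect_of_spin sg') in Hd by exact Hsp'.
  destruct Hsg as [-> | ->], Hsg' as [-> | ->]; auto; exfalso; nra.
Qed.

Lemma tilts_eq0 (x : R) : s0 < x < s1 -> tilt1 x = 0 /\ tilt2 x = 0.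
Proof.
  intros Hx.
  destruct (Req_dec (tilt1 x ^ 2 + tilt2 x ^ 2) 0) as [Z | NZ]; [exact (sum_sqr_eq0 _ _ Z) |].
  exfalso. destruct (derivable_pt_tilts x Hx) as [T1 T2].
  destruct (derivable_pt_pos_locally _ s0 s1 x Hx (derivable_pt_sum_sqr _ _ x T1 T2)) as
    (a & b & Ha & Hb & Htilt); [nra |].
  destruct (classic (forall y, a < y < b -> vdot v (e1 y) = 0 /\ vdot v (e2 y) = 0))
    as [Hperp | Hnperp].
  - destruct (tilts_eq0_of_density_normal x a b Hx ltac:(lra) Hperp) as [Z1 Z2].
    apply NZ. rewrite Z1, Z2. ring.
  - apply not_all_ex_not in Hnperp. destruct Hnperp as [y Hy].
    apply imply_to_and in Hy. destruct Hy as [Hy Hnperp].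
    assert (Hys : s0 < y < s1) by lra.
    assert (Hdens : 0 < vdot v (e1 y) ^ 2 + vdot v (e2 y) ^ 2).
    { destruct (Req_dec (vdot v (e1 y) ^ 2 + vdot v (e2 y) ^ 2) 0) as [Z | ]; [| nra].
      exfalso. exact (Hnperp (sum_sqr_eq0 _ _ Z)). }
    destruct (He1 y Hys) as [D1 _]. destruct (He2 y Hys) as [D2 _].
    destruct (derivable_pt_pos_locally _ a b y Hy (derivable_pt_sum_sqr _ _ y
      (derivable_pt_vdot _ _ _ _ _ (has_deriv3_const v y) D1)
      (derivable_pt_vdot _ _ _ _ _ (has_deriv3_const v y) D2)) Hdens)
      as (a' & b' & Ha' & Hb' & Hd).
    apply (tilted_interval_False a' b'); [lra | lra |].
    intros z Hz. split; [apply Htilt; lra | apply Hd; exact Hz].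
Qed.

Lemma normal_const (s s' : R) : s0 < s < s1 -> s0 < s' < s1 -> normal s = normal s'.
Proof.
  intros Hs Hs'.
  assert (D0 : forall y, s0 < y < s1 -> has_deriv3 normal y vzero).
  { intros y Hy. eapply has_deriv3_ext; [apply has_deriv3_normal; auto |].
    rewrite (normal1_frame y Hy). destruct (tilts_eq0 y Hy) as [-> ->].
    rewrite <- (frame_zero (e1 y) (e2 y)). f_equal. vec3_ring. }
  apply vec3_eq; [apply (derive0_const_on (fun y => vx (normal y)) s0 s1)
                 | apply (derive0_const_on (fun y => vy (normal y)) s0 s1)
                 | apply (derive0_const_on (fun y => vz (normal y)) s0 s1)]; auto;
    intros y Hy; apply (D0 y Hy).
Qed.

End CyclicSurface.
End MovingFrame.

Theorem theorem1 (alpha beta gamma : R) (s0 s1 t0 t1 : R)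
  (c e1 e2 : R -> vec3) (r : R -> R) :
  (alpha <> 0 \/ beta <> 0 \/ gamma <> 0) ->
  s0 < s1 -> t0 < t1 ->
  cyclic_data s0 s1 c e1 e2 r ->
  phi_minimal_param (V3 alpha beta gamma) s0 s1 t0 t1 (cyclic_param c e1 e2 r) ->
  forall s s', s0 < s < s1 -> s0 < s' < s1 ->
    vcross (vcross (e1 s) (e2 s)) (vcross (e1 s') (e2 s')) = vzero.
Proof.
  intros Hv _ Ht (Hc & He1 & He2 & Hr & Hdata) (Xs & Xt & Xss & Xst & Xtt & HX) s s' Hs Hs'.
  destruct (smooth3_on_deriv2 _ _ _ Hc) as (c1 & c2 & Hc').
  destruct (smooth3_on_deriv2 _ _ _ He1) as (e11 & e12 & He1').
  destruct (smooth3_on_deriv2 _ _ _ He2) as (e21 & e22 & He2').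
  destruct (smooth_on_deriv2 _ _ _ Hr) as (r1 & r2 & Hr').
  assert (Hv0 : V3 alpha beta gamma <> vzero) by (intros E; injection E; tauto).
  pose proof (fun u Hu => proj1 (Hdata u Hu)) as Hr_pos.
  pose proof (fun u Hu => proj2 (Hdata u Hu)) as Horth.
  assert (E : normal e1 e2 s = normal e1 e2 s').
  { apply (normal_const s0 s1 e1 e2 e11 e12 e21 e22 He1' He2' Horth (V3 alpha beta gamma)
      t0 t1 c c1 c2 r r1 r2 Xs Xt Xss Xst Xtt); assumption. }
  unfold normal in E. rewrite E. apply vcross_self.
Qed.
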